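(* Let $\mathbf b=\{b_n\}_{n=1}^{\infty}$ be a nonnegative real sequence. Suppose there exist a natural number $N_0$ and a constant $M(\mathbf b)>0$ such that $$\sum_{n=m}^{2m}|b_n-b_{n+1}|\le M(\mathbf b)\max_{m\le n<m+N_0}b_n\qquad\text{for all } m=1,2,\dots.$$ Then each of the following two properties holds if and only if $\lim_{n\to\infty}nb_n=0$: (i) the series $\sum_{n=1}^{\infty}b_n\sin nx$ converges uniformly on $\mathbb R$; (ii) the series $\sum_{n=1}^\infty b_n\sin nx$ converges everywhere and its sum function $f(x)$ is continuous. *)

From Stdlib Require Import Reals List.
Import ListNotations.
Open Scope R_scope.

Fixpoint sin_psum (b : nat -> R) (N : nat) (x : R) : R :=
  match N with
  | O => 0
  | S k => sin_psum b k x + b (S k) * sin (INR (S k) * x)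
  end.

(* max_{m <= n < m + N0} b_n ; for N0 >= 1 and b >= 0 this is the true maximum *)
Definition block_max (b : nat -> R) (m N0 : nat) : R :=
  fold_right Rmax (b m) (map b (seq m N0)).

Definition var_block (b : nat -> R) (m : nat) : R :=
  sum_f m (2 * m) (fun n => Rabs (b n - b (S n))).

Definition sin_series_unif_conv (b : nat -> R) : Prop :=
  exists f : R -> R, forall eps : R, 0 < eps ->
    exists N : nat, forall n : nat, (N <= n)%nat ->
      forall x : R, Rabs (sin_psum b n x - f x) < eps.

Definition sin_series_conv_cont (b : nat -> R) : Prop :=
  exists f : R -> R,
    (forall x : R, Un_cv (fun N => sin_psum b N x) (f x)) /\ continuity f.

(* Sufficiency follows the Chaundy-Jolliffe argument.  The variation condition bounds the
   variation of [b] on [[m, oo)] by [O(1/m) * sup_{k >= m} k b_k], so Abel summation against the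
   Dirichlet bound [|sum sin (k x)| <= 1 / |sin (x/2)|] makes the tails of the series uniformly
   small when [n b_n -> 0].  A uniform limit of continuous partial sums is continuous.

   Necessity goes through Riemann's theory of trigonometric series.  Convergence at
   [2 PI / (2 N0 + 1)] forces [b] to be bounded, so Riemann's function [F = sum b_n / n^2 sin (n x)]
   is continuous, and its second symmetric derivative is [- f].  Since [f] is continuous with
   [f 0 = 0], Schwarz's lemma makes [F y / y] almost monotone near [0].  Comparing [F y / y] with the
   partial sums of [sum b_n / n] shows that these converge and that the window sums
   [sum_{Q <= n <= 3Q} b_n] tend to [0]; the variation condition bounds [n b_n] by a multiple of
   such a window sum. *)

From Stdlib Require Import Reals Lra Lia List ZArith.
Open Scope R_scope.

Lemma Rabs_le_inv a c : Rabs a <= c -> - c <= a <= c.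
Proof. intros H. pose proof (Rle_abs a). pose proof (Rle_abs (- a)). rewrite Rabs_Ropp in *. lra. Qed.

Lemma INR_ge_1 n : (1 <= n)%nat -> 1 <= INR n.
Proof. intros H. apply (le_INR 1 n) in H. simpl in H. lra. Qed.

Lemma Rle_div_INR_of_mult x D n : (1 <= n)%nat -> INR n * x <= D -> x <= D / INR n.
Proof.
  intros Hn H. pose proof (INR_ge_1 n Hn).
  apply (Rmult_le_reg_l (INR n)); [lra|]. replace (INR n * (D / INR n)) with D by (field; lra). lra.
Qed.

Fixpoint sum_lt (g : nat -> R) (K : nat) : R :=
  match K with O => 0 | S k => sum_lt g k + g k end.

Lemma sum_lt_ext g h K : (forall i, (i < K)%nat -> g i = h i) -> sum_lt g K = sum_lt h K.
Proof. induction K; simpl; intros H; auto. rewrite IHK, H; auto; intros; apply H; lia. Qed.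

Lemma sum_lt_le g h K : (forall i, (i < K)%nat -> g i <= h i) -> sum_lt g K <= sum_lt h K.
Proof.
  induction K; simpl; intros H; [lra|].
  assert (sum_lt g K <= sum_lt h K) by (apply IHK; intros; apply H; lia).
  assert (g K <= h K) by (apply H; lia). lra.
Qed.

Lemma sum_lt_add g K1 K2 : sum_lt g (K1 + K2) = sum_lt g K1 + sum_lt (fun i => g (K1 + i)%nat) K2.
Proof. induction K2; simpl. rewrite Nat.add_0_r; lra. rewrite Nat.add_succ_r; simpl. rewrite IHK2; lra. Qed.

Lemma sum_lt_plus g h K : sum_lt (fun i => g i + h i) K = sum_lt g K + sum_lt h K.
Proof. induction K; simpl; lra. Qed.

Lemma sum_lt_minus g h K : sum_lt (fun i => g i - h i) K = sum_lt g K - sum_lt h K.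
Proof. induction K; simpl; lra. Qed.

Lemma sum_lt_scal c g K : sum_lt (fun i => c * g i) K = c * sum_lt g K.
Proof. induction K; simpl; [ring|]. rewrite IHK; ring. Qed.

Lemma sum_lt_const c K : sum_lt (fun _ => c) K = INR K * c.
Proof. induction K; simpl sum_lt; [simpl; lra|]. rewrite IHK, S_INR; ring. Qed.

Lemma Rabs_sum_lt g K : Rabs (sum_lt g K) <= sum_lt (fun i => Rabs (g i)) K.
Proof. induction K; simpl. rewrite Rabs_R0; lra. eapply Rle_trans; [apply Rabs_triang | lra]. Qed.

Lemma sum_lt_nonneg g K : (forall i, (i < K)%nat -> 0 <= g i) -> 0 <= sum_lt g K.
Proof. intros H. rewrite <- (Rmult_0_r (INR K)), <- sum_lt_const. now apply sum_lt_le. Qed.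

Lemma sum_lt_mono g K K' : (forall i, (i < K')%nat -> 0 <= g i) -> (K <= K')%nat ->
  sum_lt g K <= sum_lt g K'.
Proof.
  intros H HK. replace K' with (K + (K' - K))%nat by lia. rewrite sum_lt_add.
  assert (0 <= sum_lt (fun i => g (K + i)%nat) (K' - K)) by (apply sum_lt_nonneg; intros; apply H; lia).
  lra.
Qed.

Lemma sum_lt_ge_term g K r : (forall i, (i < K)%nat -> 0 <= g i) -> (r < K)%nat -> g r <= sum_lt g K.
Proof.
  intros H Hr. eapply Rle_trans; [|apply (sum_lt_mono g (S r)); auto].
  simpl. assert (0 <= sum_lt g r) by (apply sum_lt_nonneg; intros; apply H; lia). lra.
Qed.

Lemma sum_lt_telescope (c : nat -> R) m K :
  c (m + K)%nat - c m = sum_lt (fun i => c (S (m + i)) - c (m + i)%nat) K.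
Proof. induction K; simpl. rewrite Nat.add_0_r; lra. rewrite <- IHK, Nat.add_succ_r. lra. Qed.

Lemma sum_lt_abel (c g : nat -> R) K :
  sum_lt (fun i => c i * g i) (S K) =
  c K * sum_lt g (S K) + sum_lt (fun i => (c i - c (S i)) * sum_lt g (S i)) K.
Proof. induction K; [simpl; ring|]. cbn [sum_lt] in *. rewrite IHK. ring. Qed.

Lemma sin_psum_sum_lt b N x : sin_psum b N x = sum_lt (fun i => b (S i) * sin (INR (S i) * x)) N.
Proof. induction N; simpl; auto. rewrite IHN; auto. Qed.

Lemma var_block_sum_lt b m :
  var_block b m = sum_lt (fun i => Rabs (b (m + i)%nat - b (S (m + i)))) (S m).
Proof.
  assert (Hf : forall g k, sum_f_R0 g k = sum_lt g (S k)).
  { induction k; simpl; [lra|]. rewrite IHk. simpl. lra. }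
  unfold var_block, sum_f. rewrite Hf. replace (2 * m - m)%nat with m by lia.
  apply sum_lt_ext; intros. rewrite (Nat.add_comm m i); auto.
Qed.

Lemma PI_gt_3 : 3 < PI.
Proof. pose proof PI2_3_2; lra. Qed.

Lemma sin_ge_taylor3 a : 0 <= a <= PI -> a - a ^ 3 / 6 <= sin a.
Proof.
  intros [H0 H1]. destruct (sin_bound a 0 H0 H1) as [H _].
  unfold sin_approx, sin_term in H; simpl in H. lra.
Qed.

Lemma sin_le_taylor5 a : 0 <= a <= PI -> sin a <= a - a ^ 3 / 6 + a ^ 5 / 120.
Proof.
  intros [H0 H1]. destruct (sin_bound a 0 H0 H1) as [_ H].
  unfold sin_approx, sin_term in H; simpl in H. lra.
Qed.

Lemma cos_ge_taylor2 a : -1 <= a <= 1 -> 1 - a ^ 2 / 2 <= cos a.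
Proof.
  intros. pose proof PI2_1. destruct (cos_bound a 0) as [H1 _]; try lra.
  unfold cos_approx, cos_term in H1; simpl in H1. lra.
Qed.

Lemma cos_le_taylor4 a : -1 <= a <= 1 -> cos a <= 1 - a ^ 2 / 2 + a ^ 4 / 24.
Proof.
  intros. pose proof PI2_1. destruct (cos_bound a 0) as [_ H1]; try lra.
  unfold cos_approx, cos_term in H1; simpl in H1. lra.
Qed.

Lemma sin_le_id a : 0 <= a -> sin a <= a.
Proof.
  intros Ha. pose proof PI_4. destruct (Rle_lt_dec a PI).
  - pose proof (sin_le_taylor5 a (conj Ha r)).
    assert (a ^ 5 / 120 <= a ^ 3 / 6).
    { assert (a ^ 2 <= 20) by nra. assert (0 <= a ^ 3) by (apply pow_le; lra).
      replace (a ^ 5) with (a ^ 3 * a ^ 2) by ring. nra. }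
    lra.
  - pose proof (SIN_bound a). pose proof PI_gt_3. lra.
Qed.

Lemma sin_ge_opp_id a : 0 <= a -> - a <= sin a.
Proof.
  intros Ha. destruct (Rle_lt_dec a PI).
  - pose proof (sin_ge_0 a Ha r). lra.
  - pose proof (SIN_bound a). pose proof PI_gt_3. lra.
Qed.

Lemma Rabs_sin_le a : Rabs (sin a) <= Rabs a.
Proof.
  destruct (Rle_lt_dec 0 a).
  - rewrite (Rabs_right a) by lra. apply Rabs_le.
    pose proof (sin_le_id a r). pose proof (sin_ge_opp_id a r). lra.
  - rewrite (Rabs_left a), <- (Ropp_involutive a), sin_neg, Rabs_Ropp by lra. apply Rabs_le.
    pose proof (sin_le_id (- a)). pose proof (sin_ge_opp_id (- a)). lra.
Qed.

Lemma Rabs_sin_le_1 a : Rabs (sin a) <= 1.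
Proof. apply Rabs_le. pose proof (SIN_bound a); lra. Qed.

Lemma Rabs_cos_le_1 a : Rabs (cos a) <= 1.
Proof. apply Rabs_le. pose proof (COS_bound a); lra. Qed.

Lemma Rabs_sin_INR_mult n y : Rabs (sin (INR n * y)) <= INR n * Rabs (sin y).
Proof.
  induction n.
  - simpl. rewrite Rmult_0_l, sin_0, Rabs_R0; lra.
  - rewrite S_INR. replace ((INR n + 1) * y) with (INR n * y + y) by ring. rewrite sin_plus.
    eapply Rle_trans; [apply Rabs_triang|]. rewrite !Rabs_mult.
    pose proof (Rabs_cos_le_1 y). pose proof (Rabs_cos_le_1 (INR n * y)).
    pose proof (Rabs_pos (sin (INR n * y))). pose proof (Rabs_pos (sin y)). nra.
Qed.

Lemma Rabs_sin_INR_mult_half n x : Rabs (sin (INR n * x)) <= 2 * INR n * Rabs (sin (x / 2)).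
Proof.
  replace (INR n * x) with (INR (2 * n) * (x / 2)) by (rewrite mult_INR; simpl; field).
  eapply Rle_trans; [apply Rabs_sin_INR_mult|]. rewrite mult_INR; simpl; lra.
Qed.

(* Each [2 sin (x/2) sin (n x)] is the difference of two cosines at half-integer multiples of [x]. *)
Lemma sum_lt_sin_telescope r0 K x :
  2 * sin (x / 2) * sum_lt (fun i => sin (INR (r0 + i) * x)) K =
  cos ((INR r0 - / 2) * x) - cos ((INR (r0 + K) - / 2) * x).
Proof.
  induction K; simpl sum_lt; [rewrite Nat.add_0_r; ring|].
  rewrite Rmult_plus_distr_l, IHK, Nat.add_succ_r, S_INR.
  replace ((INR (r0 + K) - / 2) * x) with (INR (r0 + K) * x - x / 2) by field.
  replace ((INR (r0 + K) + 1 - / 2) * x) with (INR (r0 + K) * x + x / 2) by field.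
  rewrite cos_minus, cos_plus. ring.
Qed.

Lemma Rabs_sum_lt_sin_le r0 K x : sin (x / 2) <> 0 ->
  Rabs (sum_lt (fun i => sin (INR (r0 + i) * x)) K) <= / Rabs (sin (x / 2)).
Proof.
  intros Hs. assert (Hpos : 0 < Rabs (sin (x / 2))) by (apply Rabs_pos_lt; auto).
  assert (H2 : Rabs (2 * sin (x / 2) * sum_lt (fun i => sin (INR (r0 + i) * x)) K) <= 2).
  { rewrite sum_lt_sin_telescope. eapply Rle_trans; [apply Rabs_triang|]. rewrite Rabs_Ropp.
    pose proof (Rabs_cos_le_1 ((INR r0 - / 2) * x)).
    pose proof (Rabs_cos_le_1 ((INR (r0 + K) - / 2) * x)). lra. }
  rewrite !Rabs_mult, (Rabs_right 2) in H2 by lra.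
  apply (Rmult_le_reg_l (Rabs (sin (x / 2)))); auto. rewrite Rinv_r by lra. lra.
Qed.

Lemma div_INR_eventually_lt C e : 0 < e ->
  exists N, (1 <= N)%nat /\ forall n, (N <= n)%nat -> C / INR n < e.
Proof.
  intros He. destruct (Rle_lt_dec C 0) as [HC|HC].
  - exists 1%nat. split; [lia|]. intros n Hn.
    assert (0 < / INR n) by (apply Rinv_0_lt_compat, lt_0_INR; lia). unfold Rdiv. nra.
  - destruct (archimed_cor1 (e / C)) as [N [HN HN0]]; [apply Rdiv_lt_0_compat; lra|].
    exists N. split; [lia|]. intros n Hn.
    assert (0 < INR N) by (apply lt_0_INR; lia).
    assert (/ INR n <= / INR N) by (apply Rinv_le_contravar, le_INR; auto).
    apply (Rmult_lt_reg_l (/ C)); [apply Rinv_0_lt_compat; lra|].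
    replace (/ C * (C / INR n)) with (/ INR n) by (field; split; [apply not_0_INR; lia | lra]).
    replace (/ C * e) with (e / C) by (field; lra). lra.
Qed.

Lemma Rle_of_le_plus_div_INR X Y C N0 :
  (forall N, (N0 <= N)%nat -> X <= Y + C / INR N) -> X <= Y.
Proof.
  intros H. destruct (Rle_lt_dec X Y); auto.
  destruct (div_INR_eventually_lt C (X - Y)) as [N [_ HN]]; [lra|].
  pose proof (H (max N N0) ltac:(lia)). pose proof (HN (max N N0) ltac:(lia)). lra.
Qed.

Lemma Rabs_lim_le u l N c e : Un_cv u l ->
  (forall n, (N <= n)%nat -> Rabs (u n - c) <= e) -> Rabs (l - c) <= e.
Proof.
  intros Hu H. destruct (Rle_lt_dec (Rabs (l - c)) e) as [h|h]; auto.
  destruct (Hu (Rabs (l - c) - e)) as [N' HN']; [lra|].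
  pose proof (HN' (max N N') ltac:(lia)) as Hl. pose proof (H (max N N') ltac:(lia)) as Hc.
  unfold R_dist in Hl.
  pose proof (Rabs_triang (u (max N N') - c) (- (u (max N N') - l))) as Ht.
  rewrite Rabs_Ropp in Ht. replace (u (max N N') - c + - (u (max N N') - l)) with (l - c) in Ht by ring.
  lra.
Qed.

Definition unif_cv (u : nat -> R -> R) (f : R -> R) : Prop :=
  forall eps, 0 < eps -> exists N, forall n, (N <= n)%nat -> forall x, Rabs (u n x - f x) < eps.

Section Function_sequences.
Variable u : nat -> R -> R.

Definition unif_cauchy : Prop :=
  forall d, 0 < d -> exists N, forall p K x, (N <= p)%nat -> Rabs (u (p + K)%nat x - u p x) <= d.

Lemma Rabs_pointwise_lim_le f N d : (forall x, Un_cv (fun n => u n x) (f x)) ->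
  (forall K x, Rabs (u (N + K)%nat x - u N x) <= d) -> forall x, Rabs (f x - u N x) <= d.
Proof.
  intros Hf H x. apply (Rabs_lim_le _ _ N _ _ (Hf x)). intros n Hn.
  replace n with (N + (n - N))%nat by lia. apply H.
Qed.

Lemma pointwise_limit_of_unif_cauchy : unif_cauchy -> exists f, forall x, Un_cv (fun n => u n x) (f x).
Proof.
  intros H.
  assert (Hc : forall x, Cauchy_crit (fun n => u n x)).
  { intros x e He. destruct (H (e / 3)) as [N HN]; [lra|]. exists N. intros n m Hn Hm.
    unfold R_dist. pose proof (HN N (n - N)%nat x (le_n N)). pose proof (HN N (m - N)%nat x (le_n N)).
    replace (N + (n - N))%nat with n in * by lia. replace (N + (m - N))%nat with m in * by lia.
    replace (u n x - u m x) with ((u n x - u N x) - (u m x - u N x)) by ring.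
    eapply Rle_lt_trans; [apply Rabs_triang|]. rewrite Rabs_Ropp. lra. }
  exists (fun x => proj1_sig (R_complete _ (Hc x))). intros x. apply proj2_sig.
Qed.

Lemma unif_cv_of_unif_cauchy : unif_cauchy -> exists f, unif_cv u f.
Proof.
  intros H. destruct (pointwise_limit_of_unif_cauchy H) as [f Hf]. exists f.
  intros e He. destruct (H (e / 2)) as [N HN]; [lra|]. exists N. intros n Hn x.
  rewrite Rabs_minus_sym.
  apply Rle_lt_trans with (e / 2); [|lra]. apply (Rabs_pointwise_lim_le f n); auto.
Qed.

Lemma limit_of_unif_cauchy_rate C :
  (forall x N K, (1 <= N)%nat -> Rabs (u (N + K)%nat x - u N x) <= C / INR N) ->
  exists f, (forall x N, (1 <= N)%nat -> Rabs (f x - u N x) <= C / INR N) /\ unif_cv u f.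
Proof.
  intros H.
  assert (Hrate : forall d, 0 < d -> exists N, (1 <= N)%nat /\ forall n, (N <= n)%nat -> C / INR n <= d).
  { intros d Hd. destruct (div_INR_eventually_lt C d Hd) as [N [HN1 HN]].
    exists N. split; auto. intros n Hn. apply Rlt_le, HN; auto. }
  assert (Hu : unif_cauchy).
  { intros d Hd. destruct (Hrate d Hd) as [N [HN1 HN]]. exists N. intros p K x Hp.
    eapply Rle_trans; [apply H; lia | apply HN; auto]. }
  destruct (pointwise_limit_of_unif_cauchy Hu) as [f Hf]. exists f.
  assert (Hb : forall x N, (1 <= N)%nat -> Rabs (f x - u N x) <= C / INR N).
  { intros x N HN. apply (Rabs_pointwise_lim_le f N); auto. }
  split; auto. intros e He. destruct (Hrate (e / 2)) as [N [HN1 HN]]; [lra|].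
  exists N. intros n Hn x. rewrite Rabs_minus_sym.
  apply Rle_lt_trans with (e / 2); [|lra]. eapply Rle_trans; [apply Hb; lia | apply HN; auto].
Qed.

Lemma unif_cv_continuity f : (forall n, continuity (u n)) -> unif_cv u f -> continuity f.
Proof.
  intros Hc Hf x e He. destruct (Hf (e / 3)) as [N HN]; [lra|].
  destruct (Hc N x (e / 3)) as [a [Ha Hax]]; [lra|]. exists a. split; auto.
  intros y Hy. specialize (Hax y Hy). simpl in *. unfold R_dist in *.
  pose proof (HN N (le_n N) x). pose proof (HN N (le_n N) y).
  replace (f y - f x) with ((u N y - u N x) - (u N y - f y) + (u N x - f x)) by ring.
  eapply Rle_lt_trans; [apply Rabs_triang|].
  pose proof (Rabs_triang (u N y - u N x) (- (u N y - f y))) as Ht. rewrite Rabs_Ropp in Ht.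
  unfold Rminus in *. lra.
Qed.

End Function_sequences.

Lemma continuity_sin_psum b N : continuity (sin_psum b N).
Proof.
  induction N; simpl.
  - apply continuity_const. intros u v; auto.
  - apply continuity_plus; auto. apply continuity_scal.
    apply (continuity_comp (fun x => INR (S N) * x) sin); [|apply continuity_sin].
    apply continuity_scal, derivable_continuous, derivable_id.
Qed.

Lemma block_max_le b m N0 X : b m <= X ->
  (forall i, (i < N0)%nat -> b (m + i)%nat <= X) -> block_max b m N0 <= X.
Proof.
  intros Hm H. unfold block_max.
  assert (Hin : forall n, In n (seq m N0) -> b n <= X).
  { intros n Hn. apply in_seq in Hn. replace n with (m + (n - m))%nat by lia. apply H. lia. }
  revert Hin. induction (seq m N0); intros Hin; simpl; auto.
  apply Rmax_lub; [apply Hin; left; auto | apply IHl; intros; apply Hin; right; auto].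
Qed.

Lemma block_max_ge b m N0 : b m <= block_max b m N0.
Proof. unfold block_max. induction (seq m N0); simpl; [lra|]. eapply Rle_trans; [apply IHl | apply Rmax_r]. Qed.

Lemma block_max_attained b m N0 : (1 <= N0)%nat ->
  exists p, (m <= p < m + N0)%nat /\ block_max b m N0 = b p.
Proof.
  intros HN0. unfold block_max.
  assert (H : forall l, fold_right Rmax (b m) (map b l) = b m \/
    exists n, In n l /\ fold_right Rmax (b m) (map b l) = b n).
  { induction l as [|a l IH]; simpl; auto.
    destruct (Rle_lt_dec (b a) (fold_right Rmax (b m) (map b l))) as [h|h].
    - rewrite Rmax_right by lra. destruct IH as [E|[n [Hn E]]]; auto. right; exists n; auto.
    - rewrite Rmax_left by lra. right; exists a; auto. }
  destruct (H (seq m N0)) as [E|[n [Hn E]]].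
  - exists m. split; [lia | auto].
  - apply in_seq in Hn. exists n. split; [lia | auto].
Qed.

Lemma block_max_le_div b m N0 D : (1 <= m)%nat -> 0 <= D ->
  (forall n, (m <= n)%nat -> INR n * b n <= D) -> block_max b m N0 <= D / INR m.
Proof.
  intros Hm HD H.
  assert (Hn : forall n, (m <= n)%nat -> b n <= D / INR m).
  { intros n Hn. apply Rle_div_INR_of_mult; auto. specialize (H n Hn).
    assert (INR m <= INR n) by (apply le_INR; auto). pose proof (pos_INR m).
    destruct (Rle_lt_dec 0 (b n)); nra. }
  apply block_max_le; [apply Hn; lia | intros; apply Hn; lia].
Qed.

Section Variation_condition.
Variables (b : nat -> R) (N0 : nat) (M : R).
Hypothesis HM : 0 < M.
Hypothesis Hvar : forall m, (1 <= m)%nat -> var_block b m <= M * block_max b m N0.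

Lemma sum_lt_var_le_var_block m K : (K <= S m)%nat ->
  sum_lt (fun i => Rabs (b (m + i)%nat - b (S (m + i)))) K <= var_block b m.
Proof. intros HK. rewrite var_block_sum_lt. apply sum_lt_mono; auto. intros; apply Rabs_pos. Qed.

Lemma le_block_max_window j m : (1 <= m)%nat -> (m <= j <= 2 * m + 1)%nat ->
  b j <= (1 + M) * block_max b m N0.
Proof.
  intros Hm Hj.
  assert (Hd : Rabs (b j - b m) <= M * block_max b m N0).
  { replace j with (m + (j - m))%nat by lia. rewrite sum_lt_telescope.
    eapply Rle_trans; [apply Rabs_sum_lt|].
    rewrite (sum_lt_ext _ (fun i => Rabs (b (m + i)%nat - b (S (m + i))))) by (intros; apply Rabs_minus_sym).
    eapply Rle_trans; [apply sum_lt_var_le_var_block; lia | apply Hvar; auto]. }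
  apply Rabs_le_inv in Hd. pose proof (block_max_ge b m N0). lra.
Qed.

Lemma le_term_window j m : (1 <= N0)%nat -> (1 <= m)%nat -> (m <= j <= 2 * m + 1)%nat ->
  exists p, (m <= p < m + N0)%nat /\ b j <= (1 + M) * b p.
Proof.
  intros HN0 Hm Hj. destruct (block_max_attained b m N0 HN0) as [p [Hp E]].
  exists p. split; auto. rewrite <- E. apply le_block_max_window; auto.
Qed.

(* The blocks [m, 2m], [2m+1, 4m+2], ... carry variations at most [MD/m], [MD/(2m+1)], ...:
   a geometric series. *)
Lemma sum_lt_var_tail_le D m0 : 0 <= D -> (1 <= m0)%nat ->
  (forall n, (m0 <= n)%nat -> INR n * b n <= D) ->
  forall K m, (m0 <= m)%nat ->
  sum_lt (fun i => Rabs (b (m + i)%nat - b (S (m + i)))) K <= 2 * M * D / INR m.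
Proof.
  intros HD Hm0 Hnb K. induction K as [K IH] using (well_founded_induction Wf_nat.lt_wf). intros m Hm.
  assert (Hm1 : 1 <= INR m) by (apply INR_ge_1; lia).
  assert (Hblock : var_block b m <= M * D / INR m).
  { eapply Rle_trans; [apply Hvar; lia|]. unfold Rdiv. rewrite Rmult_assoc.
    apply Rmult_le_compat_l; [lra|]. apply block_max_le_div; auto; [lia|]. intros; apply Hnb; lia. }
  assert (0 <= M * D / INR m) by (apply Rmult_le_pos; [nra | apply Rlt_le, Rinv_0_lt_compat; lra]).
  replace (2 * M * D / INR m) with (2 * (M * D / INR m)) by (field; lra).
  destruct (Compare_dec.le_lt_dec K (S m)).
  - eapply Rle_trans; [apply sum_lt_var_le_var_block; auto | lra].
  - replace K with (S m + (K - S m))%nat by lia. rewrite sum_lt_add.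
    rewrite (sum_lt_ext _ (fun i => Rabs (b ((m + S m) + i)%nat - b (S ((m + S m) + i)))) (K - S m))
      by (intros; rewrite !Nat.add_assoc; auto).
    pose proof (IH (K - S m)%nat ltac:(lia) (m + S m)%nat ltac:(lia)) as Hrest.
    rewrite <- var_block_sum_lt.
    rewrite plus_INR, S_INR in Hrest.
    assert (2 * M * D / (INR m + (INR m + 1)) <= M * D / INR m).
    { apply (Rmult_le_reg_r ((2 * INR m + 1) * INR m)); [nra|].
      replace (2 * M * D / (INR m + (INR m + 1)) * ((2 * INR m + 1) * INR m)) with (2 * M * D * INR m)
        by (field; lra).
      replace (M * D / INR m * ((2 * INR m + 1) * INR m)) with (M * D * (2 * INR m + 1)) by (field; lra).
      assert (0 <= M * D) by nra. nra. }
    lra.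
Qed.

End Variation_condition.

(** * Sufficiency *)

Lemma split_index_exists p s K : exists J, (J <= K)%nat /\
  (J = O \/ INR (p + J) * s <= 1) /\ (J = K \/ 1 < INR (S (p + J)) * s).
Proof.
  induction K as [|K [J [HJK [HJ1 [HJ2|HJ2]]]]].
  - exists O. split; [lia | auto].
  - subst J. destruct (Rle_lt_dec (INR (S (p + K)) * s) 1).
    + exists (S K). rewrite Nat.add_succ_r. split; [lia | auto].
    + exists K. split; [lia | auto].
  - exists J. split; [lia | auto].
Qed.

Section Sufficiency.
Variables (b : nat -> R) (N0 : nat) (M : R).
Hypothesis Hb : forall n, (1 <= n)%nat -> 0 <= b n.
Hypothesis HM : 0 < M.
Hypothesis Hvar : forall m, (1 <= m)%nat -> var_block b m <= M * block_max b m N0.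
Variables (D : R) (m0 : nat).
Hypothesis HD : 0 <= D.
Hypothesis Hm0 : (1 <= m0)%nat.
Hypothesis Hnb : forall n, (m0 <= n)%nat -> INR n * b n <= D.

Lemma Rabs_term_le n x : (m0 <= n)%nat -> Rabs (b n * sin (INR n * x)) <= 2 * D * Rabs (sin (x / 2)).
Proof.
  intros Hn. rewrite Rabs_mult, (Rabs_right (b n)) by (apply Rle_ge, Hb; lia).
  pose proof (Rabs_sin_INR_mult_half n x). pose proof (Hnb n Hn). pose proof (Hb n ltac:(lia)).
  pose proof (Rabs_pos (sin (x / 2))).
  apply Rle_trans with (b n * (2 * INR n * Rabs (sin (x / 2)))); [apply Rmult_le_compat_l; auto | nra].
Qed.

Lemma Rabs_sum_lt_tail_le r0 K x : (m0 <= r0)%nat -> sin (x / 2) <> 0 ->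
  Rabs (sum_lt (fun i => b (r0 + i)%nat * sin (INR (r0 + i) * x)) K) <=
  (1 + 2 * M) * D / (INR r0 * Rabs (sin (x / 2))).
Proof.
  intros Hr0 Hs. set (s := Rabs (sin (x / 2))).
  assert (Hs0 : 0 < s) by (apply Rabs_pos_lt; auto).
  assert (Hr1 : 1 <= INR r0) by (apply INR_ge_1; lia).
  assert (0 <= (1 + 2 * M) * D / (INR r0 * s))
    by (apply Rmult_le_pos; [nra | apply Rlt_le, Rinv_0_lt_compat; nra]).
  destruct K as [|K]; [simpl; rewrite Rabs_R0; auto|].
  set (c := fun i => b (r0 + i)%nat). set (g := fun i => sin (INR (r0 + i) * x)).
  change (Rabs (sum_lt (fun i => c i * g i) (S K)) <= (1 + 2 * M) * D / (INR r0 * s)).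
  rewrite sum_lt_abel.
  assert (Hg : forall k, Rabs (sum_lt g k) <= / s) by (intros; apply Rabs_sum_lt_sin_le; auto).
  assert (Hvr : sum_lt (fun i => Rabs (c i - c (S i))) K <= 2 * M * D / INR r0).
  { unfold c. rewrite (sum_lt_ext _ (fun i => Rabs (b (r0 + i)%nat - b (S (r0 + i))))).
    - apply (sum_lt_var_tail_le b N0 M HM Hvar D m0); auto.
    - intros i _. rewrite Nat.add_succ_r. auto. }
  assert (HcK : 0 <= c K <= D / INR r0).
  { unfold c. split; [apply Hb; lia|]. apply Rle_div_INR_of_mult; [lia|].
    pose proof (Hnb (r0 + K)%nat ltac:(lia)). pose proof (Hb (r0 + K)%nat ltac:(lia)).
    assert (INR r0 <= INR (r0 + K)) by (apply le_INR; lia). nra. }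
  assert (Habel : Rabs (sum_lt (fun i => (c i - c (S i)) * sum_lt g (S i)) K) <=
    / s * sum_lt (fun i => Rabs (c i - c (S i))) K).
  { rewrite <- sum_lt_scal. eapply Rle_trans; [apply Rabs_sum_lt | apply sum_lt_le].
    intros i _. rewrite Rabs_mult, Rmult_comm. apply Rmult_le_compat_r; [apply Rabs_pos | apply Hg]. }
  eapply Rle_trans; [apply Rabs_triang|]. rewrite Rabs_mult, (Rabs_right (c K)) by lra.
  pose proof (Hg (S K)). assert (0 < / s) by (apply Rinv_0_lt_compat; auto).
  replace ((1 + 2 * M) * D / (INR r0 * s)) with (/ s * (D / INR r0 + 2 * M * D / INR r0)) by (field; lra).
  nra.
Qed.

(* Below the split index [J], where [(p + J) s <= 1], each term is at most [2 D s]; above it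
   Abel summation gains the factor [1 / (r0 s) < 1]. *)
Lemma Rabs_sin_psum_tail_le p K x : (m0 <= p)%nat ->
  Rabs (sin_psum b (p + K) x - sin_psum b p x) <= (3 + 2 * M) * D.
Proof.
  intros Hp. rewrite !sin_psum_sum_lt, sum_lt_add.
  replace (sum_lt (fun i => b (S i) * sin (INR (S i) * x)) p +
           sum_lt (fun i => b (S (p + i)) * sin (INR (S (p + i)) * x)) K -
           sum_lt (fun i => b (S i) * sin (INR (S i) * x)) p)
    with (sum_lt (fun i => b (S (p + i)) * sin (INR (S (p + i)) * x)) K) by ring.
  set (term := fun i => b (S (p + i)) * sin (INR (S (p + i)) * x)).
  set (s := Rabs (sin (x / 2))).
  assert (Hterm : forall i, Rabs (term i) <= 2 * D * s) by (intros; apply Rabs_term_le; lia).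
  destruct (Req_dec (sin (x / 2)) 0) as [Hs0|Hs0].
  { eapply Rle_trans; [apply Rabs_sum_lt|].
    eapply Rle_trans; [apply (sum_lt_le _ (fun _ => 2 * D * s)); auto|].
    rewrite sum_lt_const. unfold s. rewrite Hs0, Rabs_R0. nra. }
  assert (Hs : 0 < s) by (apply Rabs_pos_lt; auto).
  destruct (split_index_exists p s K) as [J [HJK [HJ1 HJ2]]].
  replace K with (J + (K - J))%nat by lia. rewrite sum_lt_add.
  assert (Hlow : Rabs (sum_lt term J) <= 2 * D).
  { eapply Rle_trans; [apply Rabs_sum_lt|]. eapply Rle_trans; [apply (sum_lt_le _ (fun _ => 2 * D * s)); auto|].
    rewrite sum_lt_const.
    assert (INR J * s <= 1).
    { destruct HJ1 as [->|HJ1]; [simpl; lra|].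
      assert (INR J <= INR (p + J)) by (apply le_INR; lia). nra. }
    nra. }
  assert (Hhigh : Rabs (sum_lt (fun i => term (J + i)%nat) (K - J)) <= (1 + 2 * M) * D).
  { destruct HJ2 as [HJ2|HJ2].
    { subst J. rewrite Nat.sub_diag. simpl. rewrite Rabs_R0. nra. }
    set (r0 := S (p + J)) in *.
    rewrite (sum_lt_ext _ (fun i => b (r0 + i)%nat * sin (INR (r0 + i) * x))).
    2:{ intros i _. unfold term, r0. replace (S (p + (J + i))) with (S (p + J) + i)%nat by lia. auto. }
    eapply Rle_trans; [apply Rabs_sum_lt_tail_le; auto; unfold r0; lia|].
    fold s. apply (Rmult_le_reg_r (INR r0 * s)); [nra|].
    replace ((1 + 2 * M) * D / (INR r0 * s) * (INR r0 * s)) with ((1 + 2 * M) * D) by (field; nra).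
    assert (0 <= (1 + 2 * M) * D) by nra. nra. }
  eapply Rle_trans; [apply Rabs_triang | lra].
Qed.

End Sufficiency.

Lemma sin_psum_unif_cauchy b N0 M :
  (forall n, (1 <= n)%nat -> 0 <= b n) -> 0 < M ->
  (forall m, (1 <= m)%nat -> var_block b m <= M * block_max b m N0) ->
  Un_cv (fun n => INR n * b n) 0 -> unif_cauchy (sin_psum b).
Proof.
  intros Hb HM Hvar Hcv d Hd. set (D := d / (3 + 2 * M)).
  assert (HD : 0 < D) by (unfold D; apply Rdiv_lt_0_compat; lra).
  destruct (Hcv D HD) as [N1 HN1]. exists (max 1 N1). intros p K x Hp.
  replace d with ((3 + 2 * M) * D) by (unfold D; field; lra).
  apply (Rabs_sin_psum_tail_le b N0 M Hb HM Hvar D (max 1 N1)); try lra; try lia.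
  intros n Hn. specialize (HN1 n ltac:(lia)). unfold R_dist in HN1. rewrite Rminus_0_r in HN1.
  apply Rabs_def2 in HN1. lra.
Qed.

(** * Boundedness of [b] under pointwise convergence *)

Lemma finite_pos_min (a : nat -> R) K : (forall r, (1 <= r <= K)%nat -> 0 < a r) ->
  exists c, 0 < c /\ forall r, (1 <= r <= K)%nat -> c <= a r.
Proof.
  induction K as [|K IH]; intros Ha.
  - exists 1. split; [lra | intros; lia].
  - destruct IH as [c [Hc Hmin]]; [intros; apply Ha; lia|].
    exists (Rmin c (a (S K))). split; [apply Rmin_pos; auto; apply Ha; lia|].
    intros r Hr. destruct (Nat.eq_dec r (S K)) as [->|]; [apply Rmin_r|].
    eapply Rle_trans; [apply Rmin_l | apply Hmin; lia].
Qed.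

Lemma finite_upper_bound (b : nat -> R) K : exists B, forall n, (n < K)%nat -> b n <= B.
Proof.
  induction K as [|K [B HB]]; [exists 0; intros; lia|]. exists (Rmax B (b K)).
  intros n Hn. destruct (Nat.eq_dec n K) as [->|]; [apply Rmax_r|].
  eapply Rle_trans; [apply HB; lia | apply Rmax_l].
Qed.

Lemma not_both_multiples L p1 p2 : (p2 < p1 < p2 + L)%nat ->
  (p1 mod L <> 0)%nat \/ (p2 mod L <> 0)%nat.
Proof.
  intros H. destruct (Nat.eq_dec (p1 mod L) 0) as [E1|]; auto. right. intros E2.
  assert (HL : L <> 0%nat) by lia.
  pose proof (Nat.div_mod p1 L HL). pose proof (Nat.div_mod p2 L HL).
  rewrite E1 in *. rewrite E2 in *.
  destruct (Compare_dec.le_lt_dec (p1 / L) (p2 / L)) as [Hq|Hq].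
  - pose proof (Nat.mul_le_mono_l _ _ L Hq). lia.
  - apply (Nat.mul_le_mono_l _ _ L) in Hq. rewrite Nat.mul_succ_r in Hq. lia.
Qed.

(* [2r/(2n+1)] is never an integer when [0 < r < 2n+1]: this is why the modulus is odd. *)
Lemma sin_mult_2PI_div_odd_neq_0 n r : (1 <= r < 2 * n + 1)%nat ->
  sin (INR r * (2 * PI / INR (2 * n + 1))) <> 0.
Proof.
  intros Hr E. apply sin_eq_0_0 in E. destruct E as [k Hk].
  assert (HL : 0 < INR (2 * n + 1)) by (apply lt_0_INR; lia). pose proof PI_RGT_0.
  assert (Hk' : 2 * INR r = IZR k * INR (2 * n + 1)).
  { apply (Rmult_eq_reg_r (PI / INR (2 * n + 1))).
    - replace (2 * INR r * (PI / INR (2 * n + 1))) with (INR r * (2 * PI / INR (2 * n + 1))) by (field; lra).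
      rewrite Hk. field; lra.
    - apply Rgt_not_eq, Rdiv_lt_0_compat; lra. }
  rewrite !INR_IZR_INZ, <- mult_IZR in Hk'. replace 2 with (IZR 2) in Hk' by auto.
  rewrite <- mult_IZR in Hk'. apply eq_IZR in Hk'. rewrite Nat2Z.inj_add, Nat2Z.inj_mul in Hk'.
  assert (1 <= Z.of_nat r < 2 * Z.of_nat n + 1)%Z by lia.
  destruct (Z.le_gt_cases k 0); [|destruct (Z.le_gt_cases 2 k)]; nia.
Qed.

Lemma sin_mult_2PI_div_odd_lower_bound n : exists c, 0 < c /\
  forall p, (p mod (2 * n + 1) <> 0)%nat -> c <= Rabs (sin (INR p * (2 * PI / INR (2 * n + 1)))).
Proof.
  set (L := (2 * n + 1)%nat). set (x0 := 2 * PI / INR L).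
  destruct (finite_pos_min (fun r => Rabs (sin (INR r * x0))) (2 * n)) as [c [Hc Hmin]].
  { intros r Hr. apply Rabs_pos_lt, sin_mult_2PI_div_odd_neq_0. lia. }
  exists c. split; auto. intros p Hp.
  assert (HL : L <> 0%nat) by (unfold L; lia).
  pose proof (Nat.div_mod p L HL). pose proof (Nat.mod_upper_bound p L HL).
  replace (INR p * x0) with (INR (p mod L) * x0 + 2 * INR (p / L) * PI).
  - rewrite sin_period. apply Hmin. unfold L in *. lia.
  - assert (Hp' : INR p = INR L * INR (p / L) + INR (p mod L))
      by (rewrite <- mult_INR, <- plus_INR; f_equal; auto).
    rewrite Hp'. unfold x0. field. apply not_0_INR. auto.
Qed.

Lemma sin_psum_cv_terms_le_1 b x l : Un_cv (fun N => sin_psum b N x) l ->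
  exists N1, forall n, (N1 < n)%nat -> Rabs (b n * sin (INR n * x)) <= 1.
Proof.
  intros Hl. destruct (Hl (1 / 2)) as [N1 HN1]; [lra|]. exists N1. intros [|k] Hk; [lia|].
  pose proof (HN1 k ltac:(lia)). pose proof (HN1 (S k) ltac:(lia)). unfold R_dist in *.
  cbn [sin_psum] in *.
  replace (b (S k) * sin (INR (S k) * x))
    with ((sin_psum b k x + b (S k) * sin (INR (S k) * x) - l) - (sin_psum b k x - l)) by ring.
  eapply Rle_trans; [apply Rabs_triang|]. rewrite Rabs_Ropp. lra.
Qed.

(* At [x0 = 2 PI / (2 N0 + 1)], [|sin (p x0)|] is bounded below by some [c > 0] unless [2 N0 + 1]
   divides [p].  The maxima of [b] on the windows [[j - N0, j)] and [[j, j + N0)] are less than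
   [2 N0 + 1] apart, so one of them sits at such a [p], and [b j <= (1 + M) b p <= (1 + M) / c]. *)
Lemma bounded_of_sin_psum_cv b N0 M :
  (forall n, (1 <= n)%nat -> 0 <= b n) -> (1 <= N0)%nat -> 0 < M ->
  (forall m, (1 <= m)%nat -> var_block b m <= M * block_max b m N0) ->
  (forall x, exists l, Un_cv (fun N => sin_psum b N x) l) ->
  exists B, 0 < B /\ forall n, b n <= B.
Proof.
  intros Hb HN0 HM Hvar Hx.
  set (L := (2 * N0 + 1)%nat). set (x0 := 2 * PI / INR L).
  destruct (Hx x0) as [l Hl]. destruct (sin_psum_cv_terms_le_1 b x0 l Hl) as [N1 HN1].
  destruct (sin_mult_2PI_div_odd_lower_bound N0) as [c [Hc Hsin]]. fold L x0 in Hsin.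
  destruct (finite_upper_bound b (N1 + 2 * N0 + 2)) as [B0 HB0].
  exists (Rmax 1 (Rmax B0 ((1 + M) / c))). split; [eapply Rlt_le_trans; [|apply Rmax_l]; lra|].
  intros j. destruct (Compare_dec.lt_dec j (N1 + 2 * N0 + 2)).
  { eapply Rle_trans; [apply HB0; auto|]. eapply Rle_trans; [apply Rmax_l | apply Rmax_r]. }
  eapply Rle_trans; [|apply Rmax_r]. eapply Rle_trans; [|apply Rmax_r].
  destruct (le_term_window b N0 M Hvar j j HN0 ltac:(lia) ltac:(lia)) as [p1 [Hp1 Hbp1]].
  destruct (le_term_window b N0 M Hvar j (j - N0) HN0 ltac:(lia) ltac:(lia)) as [p2 [Hp2 Hbp2]].
  assert (Hp : exists p, (N1 < p)%nat /\ b j <= (1 + M) * b p /\ (p mod L <> 0)%nat).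
  { destruct (not_both_multiples L p1 p2) as [H|H]; [unfold L; lia | exists p1 | exists p2];
      repeat split; auto; lia. }
  destruct Hp as [p [Hp [Hbp Hpm]]].
  assert (Hbp_c : b p <= 1 / c).
  { pose proof (HN1 p Hp) as H1. pose proof (Hsin p Hpm).
    rewrite Rabs_mult, (Rabs_right (b p)) in H1 by (apply Rle_ge, Hb; lia).
    pose proof (Hb p ltac:(lia)).
    apply (Rmult_le_reg_r c); auto. replace (1 / c * c) with 1 by (field; lra). nra. }
  replace ((1 + M) / c) with ((1 + M) * (1 / c)) by (field; lra).
  eapply Rle_trans; [apply Hbp | apply Rmult_le_compat_l; lra].
Qed.

(** * Riemann's function and its second symmetric derivative *)

Lemma sin_psum_0 b N : sin_psum b N 0 = 0.
Proof. induction N; simpl; auto. rewrite IHN, Rmult_0_r, sin_0. ring. Qed.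

Lemma sum_lt_inv_sq_le N K : (1 <= N)%nat ->
  sum_lt (fun i => / INR (S (N + i)) ^ 2) K <= / INR N - / INR (N + K).
Proof.
  intros HN. induction K; cbn [sum_lt]; [rewrite Nat.add_0_r; lra|].
  assert (1 <= INR (N + K)) by (apply INR_ge_1; lia).
  rewrite Nat.add_succ_r, S_INR.
  assert (/ (INR (N + K) + 1) ^ 2 <= / INR (N + K) - / (INR (N + K) + 1)).
  { replace (/ INR (N + K) - / (INR (N + K) + 1)) with (/ (INR (N + K) * (INR (N + K) + 1))) by (field; lra).
    apply Rinv_le_contravar; nra. }
  lra.
Qed.

(* Partial sums of Riemann's function, the twice formally integrated series. *)
Definition riemann_psum (b : nat -> R) : nat -> R -> R := sin_psum (fun n => b n / INR n ^ 2).

Section Riemann_function.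
Variables (b : nat -> R) (B : R).
Hypothesis Hb : forall n, (1 <= n)%nat -> 0 <= b n <= B.

Lemma riemann_psum_tail_le x N K : (1 <= N)%nat ->
  Rabs (riemann_psum b (N + K) x - riemann_psum b N x) <= B / INR N.
Proof.
  intros HN. unfold riemann_psum. rewrite !sin_psum_sum_lt, sum_lt_add.
  match goal with |- Rabs (?A + ?T - ?A) <= _ => replace (A + T - A) with T by ring end.
  assert (HB : 0 <= B) by (pose proof (Hb 1%nat (le_n _)); lra).
  eapply Rle_trans; [apply Rabs_sum_lt|].
  eapply Rle_trans; [apply (sum_lt_le _ (fun i => B * / INR (S (N + i)) ^ 2))|].
  - intros i _. pose proof (Hb (S (N + i)) ltac:(lia)).
    assert (0 < / INR (S (N + i)) ^ 2) by (apply Rinv_0_lt_compat, pow_lt, lt_0_INR; lia).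
    unfold Rdiv. rewrite !Rabs_mult, (Rabs_right (b _)), (Rabs_right (/ _)) by lra.
    pose proof (Rabs_sin_le_1 (INR (S (N + i)) * x)). pose proof (Rabs_pos (sin (INR (S (N + i)) * x))).
    rewrite Rmult_assoc. rewrite <- (Rmult_1_r (/ _)) at 2. apply Rmult_le_compat; try nra.
  - rewrite sum_lt_scal. pose proof (sum_lt_inv_sq_le N K HN).
    assert (0 < / INR (N + K)) by (apply Rinv_0_lt_compat, lt_0_INR; lia).
    unfold Rdiv. nra.
Qed.

Lemma riemann_function_exists : exists F,
  (forall x N, (1 <= N)%nat -> Rabs (F x - riemann_psum b N x) <= B / INR N) /\ continuity F /\ F 0 = 0.
Proof.
  destruct (limit_of_unif_cauchy_rate (riemann_psum b) B) as [F [HF Hcv]].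
  { intros x N K HN. apply riemann_psum_tail_le; auto. }
  exists F. repeat split; auto.
  - apply (unif_cv_continuity (riemann_psum b)); auto. intros N. apply continuity_sin_psum.
  - assert (H0 : forall N, (1 <= N)%nat -> Rabs (F 0) <= B / INR N).
    { intros N HN. pose proof (HF 0 N HN). unfold riemann_psum in *.
      rewrite sin_psum_0, Rminus_0_r in *. auto. }
    assert (F 0 <= 0 /\ - F 0 <= 0) as [H1 H2].
    { split; apply (Rle_of_le_plus_div_INR _ _ B 1); intros N HN;
        pose proof (Rabs_le_inv _ _ (H0 N HN)); lra. }
    lra.
Qed.

End Riemann_function.

Definition sinc (s : R) : R := sin s / s.

(* Summation kernel of Riemann's method: the second difference of [riemann_psum] with step [2t]
   weights the [n]-th term by [riemann_kernel t n]. *)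
Definition riemann_kernel (t : R) (n : nat) : R := sinc (INR n * t) ^ 2.

(* Increments of this bounded increasing function dominate those of [sinc ^ 2]. *)
Definition sinc_sq_potential (s : R) : R := if Rle_dec s 1 then s ^ 2 else 2 - / s.

Lemma Rabs_sinc_le_1 s : 0 < s -> Rabs (sinc s) <= 1.
Proof.
  intros Hs. unfold sinc, Rdiv. rewrite Rabs_mult, Rabs_inv, (Rabs_right s) by lra.
  pose proof (Rabs_sin_le s) as Hsin. rewrite (Rabs_right s) in Hsin by lra.
  apply (Rmult_le_reg_r s); auto. rewrite Rmult_assoc, Rinv_l by lra. lra.
Qed.

Lemma Rabs_sinc_le_inv s : 0 < s -> Rabs (sinc s) <= / s.
Proof.
  intros Hs. unfold sinc, Rdiv. rewrite Rabs_mult, Rabs_inv, (Rabs_right s) by lra.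
  pose proof (Rabs_sin_le_1 s). assert (0 < / s) by (apply Rinv_0_lt_compat; auto). nra.
Qed.

Lemma one_sub_sinc_sq_le s : 0 < s -> 1 - sinc s ^ 2 <= s ^ 2 / 3.
Proof.
  intros Hs. pose proof (Rabs_le_inv _ _ (Rabs_sinc_le_1 s Hs)).
  destruct (Rle_lt_dec (s ^ 2) 6); [|nra].
  assert (s <= 3) by nra. pose proof PI_gt_3. pose proof (sin_ge_taylor3 s ltac:(lra)).
  assert (1 - s ^ 2 / 6 <= sinc s).
  { apply (Rmult_le_reg_r s); auto. unfold sinc, Rdiv. rewrite Rmult_assoc, Rinv_l by lra. nra. }
  assert (0 <= 1 - s ^ 2 / 6) by nra. nra.
Qed.

Lemma riemann_kernel_bounds t n : 0 < t -> (1 <= n)%nat -> 0 <= riemann_kernel t n <= 1.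
Proof.
  intros Ht Hn. unfold riemann_kernel.
  assert (Hnt : 0 < INR n * t) by (apply Rmult_lt_0_compat; auto; apply lt_0_INR; lia).
  pose proof (Rabs_le_inv _ _ (Rabs_sinc_le_1 _ Hnt)). nra.
Qed.

Lemma one_sub_riemann_kernel_le t n : 0 < t -> (1 <= n)%nat ->
  1 - riemann_kernel t n <= (INR n * t) ^ 2 / 3.
Proof. intros. apply one_sub_sinc_sq_le, Rmult_lt_0_compat; auto. apply lt_0_INR; lia. Qed.

Lemma sinc_sq_potential_bounds s : 0 <= s -> 0 <= sinc_sq_potential s <= 2.
Proof.
  intros Hs. unfold sinc_sq_potential. destruct (Rle_dec s 1); [split; nra|].
  assert (0 < / s < 1) by (split; [apply Rinv_0_lt_compat | rewrite <- Rinv_1; apply Rinv_lt_contravar]; lra).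
  lra.
Qed.

Lemma sinc_add_sub s t : 0 < s -> 0 < s + t ->
  sinc (s + t) - sinc s =
  (s * (sin s * (cos t - 1) + cos s * (sin t - t)) + t * (s * cos s - sin s)) / (s * (s + t)).
Proof. intros. unfold sinc. rewrite sin_plus. field. lra. Qed.

Lemma Rabs_sinc_add_sub_le_small s t : 0 < t <= s -> s <= 1 ->
  Rabs (sinc (s + t) - sinc s) <= (s * t ^ 2 / 2 + t ^ 3 / 6 + t * s ^ 2 / 2) / (s + t).
Proof.
  intros [Ht Hts] Hs1. pose proof PI_gt_3.
  rewrite sinc_add_sub by lra. unfold Rdiv at 1. rewrite Rabs_mult, Rabs_inv, (Rabs_right (s * (s + t))) by nra.
  replace ((s * t ^ 2 / 2 + t ^ 3 / 6 + t * s ^ 2 / 2) / (s + t))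
    with (s * (s * t ^ 2 / 2 + t ^ 3 / 6 + t * s ^ 2 / 2) * / (s * (s + t))) by (field; lra).
  apply Rmult_le_compat_r; [apply Rlt_le, Rinv_0_lt_compat; nra|].
  pose proof (cos_ge_taylor2 t ltac:(lra)). pose proof (COS_bound t).
  pose proof (sin_ge_taylor3 t ltac:(lra)). pose proof (sin_le_id t ltac:(lra)).
  pose proof (sin_ge_taylor3 s ltac:(lra)). pose proof (sin_le_id s ltac:(lra)).
  pose proof (cos_ge_taylor2 s ltac:(lra)). pose proof (cos_le_taylor4 s ltac:(lra)).
  pose proof (Rabs_le_inv _ _ (Rabs_cos_le_1 s)).
  assert (HR : Rabs (sin s * (cos t - 1) + cos s * (sin t - t)) <= s * t ^ 2 / 2 + t ^ 3 / 6).
  { eapply Rle_trans; [apply Rabs_triang|]. rewrite !Rabs_mult.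
    assert (Rabs (cos t - 1) <= t ^ 2 / 2) by (apply Rabs_le; lra).
    assert (Rabs (sin t - t) <= t ^ 3 / 6) by (apply Rabs_le; lra).
    pose proof (Rabs_sin_le s) as Hss. rewrite (Rabs_right s) in Hss by lra.
    pose proof (Rabs_cos_le_1 s). pose proof (Rabs_pos (sin s)). pose proof (Rabs_pos (cos t - 1)).
    pose proof (Rabs_pos (cos s)). pose proof (Rabs_pos (sin t - t)). nra. }
  assert (Hsc : Rabs (s * cos s - sin s) <= s ^ 3 / 2).
  { assert (0 <= s ^ 3) by (apply pow_le; lra).
    assert (s * cos s <= s - s ^ 3 / 2 + s ^ 5 / 24).
    { replace (s - s ^ 3 / 2 + s ^ 5 / 24) with (s * (1 - s ^ 2 / 2 + s ^ 4 / 24)) by field.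
      apply Rmult_le_compat_l; lra. }
    assert (s - s ^ 3 / 2 <= s * cos s).
    { replace (s - s ^ 3 / 2) with (s * (1 - s ^ 2 / 2)) by field. apply Rmult_le_compat_l; lra. }
    assert (s ^ 5 / 24 <= s ^ 3 / 3).
    { assert (s ^ 2 <= 1) by nra. replace (s ^ 5) with (s ^ 3 * s ^ 2) by ring. nra. }
    apply Rabs_le. split; lra. }
  eapply Rle_trans; [apply Rabs_triang|]. rewrite !Rabs_mult, (Rabs_right s), (Rabs_right t) by lra.
  assert (s * Rabs (sin s * (cos t - 1) + cos s * (sin t - t)) <= s * (s * t ^ 2 / 2 + t ^ 3 / 6))
    by (apply Rmult_le_compat_l; lra).
  assert (t * Rabs (s * cos s - sin s) <= t * (s ^ 3 / 2)) by (apply Rmult_le_compat_l; lra).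
  nra.
Qed.

Lemma Rabs_sinc_add_sub_le_large s t : 0 < t <= 1 -> 1 < s ->
  Rabs (sinc (s + t) - sinc s) <= 3 * t / (s + t).
Proof.
  intros [Ht Ht1] Hs.
  rewrite sinc_add_sub by lra. unfold Rdiv at 1. rewrite Rabs_mult, Rabs_inv, (Rabs_right (s * (s + t))) by nra.
  replace (3 * t / (s + t)) with (3 * s * t * / (s * (s + t))) by (field; lra).
  apply Rmult_le_compat_r; [apply Rlt_le, Rinv_0_lt_compat; nra|].
  pose proof (cos_ge_taylor2 t ltac:(lra)). pose proof (COS_bound t).
  pose proof (sin_ge_taylor3 t ltac:(pose proof PI_gt_3; lra)). pose proof (sin_le_id t ltac:(lra)).
  pose proof (Rabs_sin_le_1 s). pose proof (Rabs_cos_le_1 s).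
  pose proof (Rabs_pos (sin s)). pose proof (Rabs_pos (cos s)).
  assert (HR : Rabs (sin s * (cos t - 1) + cos s * (sin t - t)) <= t).
  { eapply Rle_trans; [apply Rabs_triang|]. rewrite !Rabs_mult.
    assert (Rabs (cos t - 1) <= t ^ 2 / 2) by (apply Rabs_le; lra).
    assert (Rabs (sin t - t) <= t ^ 3 / 6) by (apply Rabs_le; lra).
    pose proof (Rabs_pos (cos t - 1)). pose proof (Rabs_pos (sin t - t)).
    assert (Rabs (sin s) * Rabs (cos t - 1) <= t ^ 2 / 2) by nra.
    assert (Rabs (cos s) * Rabs (sin t - t) <= t ^ 3 / 6) by nra. nra. }
  assert (Hsc : Rabs (s * cos s - sin s) <= 2 * s).
  { eapply Rle_trans; [apply Rabs_triang|]. rewrite Rabs_Ropp, Rabs_mult, (Rabs_right s) by lra. nra. }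
  eapply Rle_trans; [apply Rabs_triang|]. rewrite !Rabs_mult, (Rabs_right s), (Rabs_right t) by lra. nra.
Qed.

Lemma Rabs_sq_sub a c : Rabs (a ^ 2 - c ^ 2) = Rabs (c - a) * Rabs (a + c).
Proof. rewrite <- Rabs_mult, <- Rabs_Ropp. f_equal. ring. Qed.

Lemma Rabs_sinc_sq_sub_le s t : 0 < t <= 1 -> t <= s ->
  Rabs (sinc s ^ 2 - sinc (s + t) ^ 2) <= 6 * (sinc_sq_potential (s + t) - sinc_sq_potential s).
Proof.
  intros Ht Hts. rewrite Rabs_sq_sub.
  pose proof (Rabs_pos (sinc (s + t) - sinc s)).
  unfold sinc_sq_potential. destruct (Rle_dec s 1) as [Hs|Hs].
  - pose proof (Rabs_sinc_add_sub_le_small s t ltac:(lra) Hs).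
    assert (Rabs (sinc s + sinc (s + t)) <= 2).
    { eapply Rle_trans; [apply Rabs_triang|].
      pose proof (Rabs_sinc_le_1 s ltac:(lra)). pose proof (Rabs_sinc_le_1 (s + t) ltac:(lra)). lra. }
    eapply Rle_trans; [apply Rmult_le_compat; eauto; apply Rabs_pos|].
    apply (Rmult_le_reg_r (s + t)); [lra|].
    replace ((s * t ^ 2 / 2 + t ^ 3 / 6 + t * s ^ 2 / 2) / (s + t) * 2 * (s + t))
      with (s * t ^ 2 + t ^ 3 / 3 + t * s ^ 2) by (field; lra).
    assert (0 <= s ^ 2 * t) by (apply Rmult_le_pos; nra).
    assert (0 <= s * t ^ 2) by (apply Rmult_le_pos; nra).
    assert (0 <= t ^ 3) by (apply pow_le; lra).
    destruct (Rle_dec (s + t) 1); [nra|].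
    replace (6 * (2 - / (s + t) - s ^ 2) * (s + t)) with (6 * ((s + t) * (2 - s ^ 2) - 1)) by (field; lra).
    assert (t ^ 2 <= 1) by nra. assert (s ^ 2 <= 1) by nra. assert (0 <= s * t) by nra.
    assert (s * t ^ 2 <= t) by (replace (s * t ^ 2) with ((s * t) * t) by ring; nra).
    assert (t ^ 3 <= t) by (replace (t ^ 3) with (t ^ 2 * t) by ring; nra).
    assert (t * s ^ 2 <= t) by nra.
    assert (1 - s ^ 2 >= 1 - s) by nra.
    nra.
  - destruct (Rle_dec (s + t) 1); [lra|].
    pose proof (Rabs_sinc_add_sub_le_large s t Ht ltac:(lra)).
    assert (Rabs (sinc s + sinc (s + t)) <= 2 / s).
    { eapply Rle_trans; [apply Rabs_triang|].
      pose proof (Rabs_sinc_le_inv s ltac:(lra)). pose proof (Rabs_sinc_le_inv (s + t) ltac:(lra)).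
      assert (/ (s + t) <= / s) by (apply Rinv_le_contravar; lra). unfold Rdiv. lra. }
    eapply Rle_trans; [apply Rmult_le_compat; eauto; apply Rabs_pos|]. right. field. lra.
Qed.

Lemma sum_lt_var_riemann_kernel_le t K : 0 < t <= 1 ->
  sum_lt (fun i => Rabs (riemann_kernel t (S i) - riemann_kernel t (S (S i)))) K <= 12.
Proof.
  intros Ht.
  assert (Htel : sum_lt (fun i => Rabs (riemann_kernel t (S i) - riemann_kernel t (S (S i)))) K <=
    6 * (sinc_sq_potential (INR (S K) * t) - sinc_sq_potential t)).
  { induction K; cbn [sum_lt]; [replace (INR 1 * t) with t by (simpl; ring); lra|].
    assert (Hstep : Rabs (riemann_kernel t (S K) - riemann_kernel t (S (S K))) <=
      6 * (sinc_sq_potential (INR (S (S K)) * t) - sinc_sq_potential (INR (S K) * t))).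
    { unfold riemann_kernel.
      replace (INR (S (S K)) * t) with (INR (S K) * t + t) by (rewrite (S_INR (S K)); ring).
      apply Rabs_sinc_sq_sub_le; auto. pose proof (INR_ge_1 (S K) ltac:(lia)). nra. }
    lra. }
  assert (HKt : 0 <= INR (S K) * t) by (apply Rmult_le_pos; [apply pos_INR | lra]).
  pose proof (sinc_sq_potential_bounds (INR (S K) * t) HKt).
  pose proof (sinc_sq_potential_bounds t ltac:(lra)). lra.
Qed.

Section Kernel_summation.
Variables (s : nat -> R) (sigma : R) (u : nat -> R) (t e : R) (N1 : nat).
Hypothesis Hs0 : s O = 0.
Hypothesis Ht : 0 < t.
Hypothesis Hu : forall n, (1 <= n)%nat -> 0 <= u n <= 1.
Hypothesis Hu1 : forall n, (1 <= n)%nat -> 1 - u n <= (INR n * t) ^ 2 / 3.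
Hypothesis Hvar : forall K, sum_lt (fun i => Rabs (u (S i) - u (S (S i)))) K <= 12.
Hypothesis Hcv : forall n, (N1 <= n)%nat -> Rabs (s n - sigma) <= e.

Lemma sum_lt_kernel_abel K :
  sum_lt (fun i => (s (S i) - s i) * u (S i)) (S K) - sigma * u 1%nat =
  (s (S K) - sigma) * u (S K) + sum_lt (fun i => (s (S i) - sigma) * (u (S i) - u (S (S i)))) K.
Proof. induction K; cbn [sum_lt] in *; [rewrite Hs0; ring | lra]. Qed.

Lemma Rabs_kernel_step_le i : (S i < N1)%nat ->
  Rabs (u (S i) - u (S (S i))) <= 2 / 3 * (INR N1 * t) ^ 2.
Proof.
  intros Hi.
  assert (Hsq : forall n, (n <= N1)%nat -> (INR n * t) ^ 2 <= (INR N1 * t) ^ 2).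
  { intros n Hn. apply pow_incr. split; [apply Rmult_le_pos; [apply pos_INR | lra]|].
    apply Rmult_le_compat_r; [lra | apply le_INR; auto]. }
  pose proof (Hu (S i) ltac:(lia)). pose proof (Hu (S (S i)) ltac:(lia)).
  pose proof (Hu1 (S i) ltac:(lia)). pose proof (Hu1 (S (S i)) ltac:(lia)).
  pose proof (Hsq (S i) ltac:(lia)). pose proof (Hsq (S (S i)) ltac:(lia)).
  apply Rabs_le. lra.
Qed.

(* Below [N1] the kernel is nearly constant, beyond [N1] the partial sums are nearly [sigma]. *)
Lemma Rabs_kernel_abel_sum_le K : (N1 <= K)%nat ->
  Rabs (sum_lt (fun i => (s (S i) - sigma) * (u (S i) - u (S (S i)))) K) <=
  2 / 3 * (INR N1 * t) ^ 2 * sum_lt (fun i => Rabs (s (S i) - sigma)) N1 + 12 * e.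
Proof.
  intros HK. set (c := 2 / 3 * (INR N1 * t) ^ 2).
  assert (He : 0 <= e) by (pose proof (Hcv N1 (le_n _)); pose proof (Rabs_pos (s N1 - sigma)); lra).
  assert (Hc : 0 <= c) by (unfold c; pose proof (pow2_ge_0 (INR N1 * t)); lra).
  replace K with (N1 - 1 + (K - (N1 - 1)))%nat by lia. rewrite sum_lt_add.
  eapply Rle_trans; [apply Rabs_triang | apply Rplus_le_compat].
  - eapply Rle_trans; [apply Rabs_sum_lt|]. rewrite <- sum_lt_scal.
    eapply Rle_trans;
      [|apply (sum_lt_mono _ (N1 - 1)); [intros; apply Rmult_le_pos; auto; apply Rabs_pos | lia]].
    apply sum_lt_le. intros i Hi. rewrite Rabs_mult, Rmult_comm. apply Rmult_le_compat_r; [apply Rabs_pos|].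
    apply Rabs_kernel_step_le. lia.
  - eapply Rle_trans; [apply Rabs_sum_lt|].
    eapply Rle_trans;
      [apply (sum_lt_le _ (fun i => e * Rabs (u (S (N1 - 1 + i)) - u (S (S (N1 - 1 + i))))))|].
    + intros i _. rewrite Rabs_mult. apply Rmult_le_compat_r; [apply Rabs_pos | apply Hcv; lia].
    + rewrite sum_lt_scal, Rmult_comm. apply Rmult_le_compat_r; auto.
      eapply Rle_trans; [|apply (Hvar (N1 - 1 + (K - (N1 - 1))))]. rewrite sum_lt_add.
      pose proof (sum_lt_nonneg (fun i => Rabs (u (S i) - u (S (S i)))) (N1 - 1) (fun i _ => Rabs_pos _)).
      lra.
Qed.

Lemma Rabs_kernel_sum_sub_le K : (N1 <= K)%nat ->
  Rabs (sum_lt (fun i => (s (S i) - s i) * u (S i)) (S K) - sigma) <=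
  13 * e + 2 / 3 * (INR N1 * t) ^ 2 * sum_lt (fun i => Rabs (s (S i) - sigma)) N1
  + Rabs sigma * (t ^ 2 / 3).
Proof.
  intros HK. pose proof (Rabs_kernel_abel_sum_le K HK) as Habel.
  assert (Hlast : Rabs ((s (S K) - sigma) * u (S K)) <= e).
  { rewrite Rabs_mult. pose proof (Hu (S K) ltac:(lia)). rewrite (Rabs_right (u (S K))) by lra.
    pose proof (Hcv (S K) ltac:(lia)). pose proof (Rabs_pos (s (S K) - sigma)). nra. }
  assert (Hfirst : Rabs (sigma * u 1%nat - sigma) <= Rabs sigma * (t ^ 2 / 3)).
  { replace (sigma * u 1%nat - sigma) with (- (sigma * (1 - u 1%nat))) by ring.
    rewrite Rabs_Ropp, Rabs_mult. pose proof (Hu 1%nat (le_n _)). pose proof (Hu1 1%nat (le_n _)).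
    simpl INR in *. rewrite Rmult_1_l in *. rewrite (Rabs_right (1 - u 1%nat)) by lra.
    apply Rmult_le_compat_l; [apply Rabs_pos | lra]. }
  replace (sum_lt (fun i => (s (S i) - s i) * u (S i)) (S K) - sigma)
    with ((s (S K) - sigma) * u (S K) + sum_lt (fun i => (s (S i) - sigma) * (u (S i) - u (S (S i)))) K
          + (sigma * u 1%nat - sigma))
    by (pose proof (sum_lt_kernel_abel K); lra).
  eapply Rle_trans; [apply Rabs_triang|].
  eapply Rle_trans; [apply Rplus_le_compat_r, Rabs_triang|].
  lra.
Qed.
End Kernel_summation.

Lemma riemann_psum_second_difference b N x t : t <> 0 ->
  riemann_psum b N (x + 2 * t) + riemann_psum b N (x - 2 * t) - 2 * riemann_psum b N x =
  - 4 * t ^ 2 * sum_lt (fun i => (sin_psum b (S i) x - sin_psum b i x) * riemann_kernel t (S i)) N.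
Proof.
  intros Ht. unfold riemann_psum. rewrite !sin_psum_sum_lt.
  rewrite <- sum_lt_scal, <- sum_lt_scal, <- sum_lt_plus, <- sum_lt_minus.
  apply sum_lt_ext. intros i _. cbn [sin_psum].
  assert (INR (S i) <> 0) by (apply not_0_INR; lia).
  unfold riemann_kernel, sinc.
  replace (INR (S i) * (x + 2 * t)) with (INR (S i) * x + 2 * (INR (S i) * t)) by ring.
  replace (INR (S i) * (x - 2 * t)) with (INR (S i) * x - 2 * (INR (S i) * t)) by ring.
  rewrite sin_plus, sin_minus, cos_2a_sin. field. auto.
Qed.

Lemma Rabs_second_difference_quotient_le b B F x t N :
  (forall y N, (1 <= N)%nat -> Rabs (F y - riemann_psum b N y) <= B / INR N) -> 0 < t -> (1 <= N)%nat ->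
  Rabs ((F (x + 2 * t) + F (x - 2 * t) - 2 * F x) / (4 * t ^ 2) +
        sum_lt (fun i => (sin_psum b (S i) x - sin_psum b i x) * riemann_kernel t (S i)) N)
  <= B / t ^ 2 / INR N.
Proof.
  intros HF Ht HN.
  assert (Ht2 : 0 < t ^ 2) by (apply pow_lt; lra).
  assert (HN0 : 0 < INR N) by (apply lt_0_INR; lia).
  pose proof (riemann_psum_second_difference b N x t ltac:(lra)) as Hdiff.
  set (W := sum_lt (fun i => (sin_psum b (S i) x - sin_psum b i x) * riemann_kernel t (S i)) N) in *.
  set (E := (F (x + 2 * t) - riemann_psum b N (x + 2 * t)) + (F (x - 2 * t) - riemann_psum b N (x - 2 * t))
            - 2 * (F x - riemann_psum b N x)).
  assert (HE : Rabs E <= 4 * (B / INR N)).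
  { pose proof (HF (x + 2 * t) N HN). pose proof (HF (x - 2 * t) N HN). pose proof (HF x N HN). unfold E.
    eapply Rle_trans; [apply Rabs_triang|]. rewrite Rabs_Ropp, Rabs_mult, (Rabs_right 2) by lra.
    eapply Rle_trans; [apply Rplus_le_compat_r, Rabs_triang | lra]. }
  replace ((F (x + 2 * t) + F (x - 2 * t) - 2 * F x) / (4 * t ^ 2) + W) with (E / (4 * t ^ 2))
    by (unfold E; field_simplify_eq; [nra | lra]).
  unfold Rdiv at 1. rewrite Rabs_mult, Rabs_inv, (Rabs_right (4 * t ^ 2)) by lra.
  replace (B / t ^ 2 / INR N) with (4 * (B / INR N) * / (4 * t ^ 2)) by (field; lra).
  apply Rmult_le_compat_r; [apply Rlt_le, Rinv_0_lt_compat|]; lra.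
Qed.

Lemma riemann_second_derivative b B F x fx :
  (forall n, (1 <= n)%nat -> 0 <= b n <= B) ->
  (forall y N, (1 <= N)%nat -> Rabs (F y - riemann_psum b N y) <= B / INR N) ->
  Un_cv (fun N => sin_psum b N x) fx ->
  forall eta, 0 < eta -> exists t0, 0 < t0 /\ forall t, 0 < t < t0 ->
    Rabs ((F (x + 2 * t) + F (x - 2 * t) - 2 * F x) / (4 * t ^ 2) + fx) <= eta.
Proof.
  intros Hb HF Hfx eta Heta. set (e := eta / 14).
  destruct (Hfx e ltac:(unfold e; lra)) as [N1' HN1']. set (N1 := max 1 N1').
  set (A0 := sum_lt (fun i => Rabs (sin_psum b (S i) x - fx)) N1).
  assert (HA0 : 0 <= INR N1 ^ 2 * A0).
  { apply Rmult_le_pos; [apply pow_le, pos_INR | apply sum_lt_nonneg; intros; apply Rabs_pos]. }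
  set (den := INR N1 ^ 2 * A0 + Rabs fx + 1).
  assert (Hden : 0 < den) by (unfold den; pose proof (Rabs_pos fx); lra).
  exists (Rmin 1 (e / den)). split; [apply Rmin_pos; [lra | apply Rdiv_lt_0_compat; unfold e; lra]|].
  intros t [Ht0 Ht1]. pose proof (Rmin_l 1 (e / den)). pose proof (Rmin_r 1 (e / den)).
  assert (Hkernel : forall K, (N1 <= K)%nat ->
    Rabs (sum_lt (fun i => (sin_psum b (S i) x - sin_psum b i x) * riemann_kernel t (S i)) (S K) - fx)
      <= 14 * e).
  { intros K HK. eapply Rle_trans.
    - apply (Rabs_kernel_sum_sub_le (fun n => sin_psum b n x) fx (riemann_kernel t) t e N1); auto; try lia.
      + intros n Hn. apply riemann_kernel_bounds; auto.
      + intros n Hn. apply one_sub_riemann_kernel_le; auto.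
      + intros. apply sum_lt_var_riemann_kernel_le; lra.
      + intros n Hn. apply Rlt_le, HN1'. lia.
    - fold A0. assert (t ^ 2 <= t) by nra.
      assert (t * den <= e).
      { apply (Rmult_le_reg_r (/ den)); [apply Rinv_0_lt_compat; auto|].
        replace (t * den * / den) with t by (field; lra). unfold Rdiv in *. lra. }
      pose proof (Rabs_pos fx). pose proof (pow2_ge_0 t). unfold den in *.
      replace (2 / 3 * (INR N1 * t) ^ 2 * A0) with (2 / 3 * t ^ 2 * (INR N1 ^ 2 * A0)) by ring.
      nra. }
  apply (Rle_of_le_plus_div_INR _ _ (B / t ^ 2) (S N1)). intros N HN.
  pose proof (Hkernel (N - 1)%nat ltac:(lia)) as HW. replace (S (N - 1)) with N in HW by lia.
  pose proof (Rabs_second_difference_quotient_le b B F x t N HF Ht0 ltac:(lia)) as HQ.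
  set (W := sum_lt (fun i => (sin_psum b (S i) x - sin_psum b i x) * riemann_kernel t (S i)) N) in *.
  set (Q := (F (x + 2 * t) + F (x - 2 * t) - 2 * F x) / (4 * t ^ 2)) in *.
  pose proof (Rabs_triang (Q + W) (- (W - fx))) as Htr. rewrite Rabs_Ropp in Htr.
  replace (Q + W + - (W - fx)) with (Q + fx) in Htr by ring.
  unfold e in *. lra.
Qed.

(** * Schwarz's lemma and the almost monotonicity of [F y / y] *)

(* At an interior maximum every second difference would be nonpositive. *)
Lemma nonpos_of_pos_second_differences G a c : a < c ->
  (forall x, a <= x <= c -> continuity_pt G x) -> G a <= 0 -> G c <= 0 ->
  (forall x, a < x < c -> forall r, 0 < r -> exists h, 0 < h < r /\ 0 < G (x + h) + G (x - h) - 2 * G x) ->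
  forall y, a <= y <= c -> G y <= 0.
Proof.
  intros Hac Hc Ha Hcc H y Hy. destruct (Rle_lt_dec (G y) 0) as [h|h]; auto. exfalso.
  destruct (continuity_ab_maj G a c ltac:(lra) Hc) as [x0 [Hmax Hx0]].
  pose proof (Hmax y Hy).
  assert (Hx0' : a < x0 < c) by (destruct (Req_dec x0 a); destruct (Req_dec x0 c); subst; lra).
  destruct (H x0 Hx0' (Rmin (x0 - a) (c - x0))) as [d [Hd1 Hd2]]; [apply Rmin_pos; lra|].
  pose proof (Rmin_l (x0 - a) (c - x0)). pose proof (Rmin_r (x0 - a) (c - x0)).
  pose proof (Hmax (x0 + d) ltac:(lra)). pose proof (Hmax (x0 - d) ltac:(lra)). lra.
Qed.

(* Compare [F] with the parabola [x |-> x (F y2 / y2 + eps y2) - eps x^2] through [0] and [y2]. *)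
Lemma div_le_of_second_differences F eps y1 y2 : continuity F -> F 0 = 0 -> 0 < eps -> 0 < y1 < y2 ->
  (forall x, 0 < x < y2 -> forall r, 0 < r -> exists h, 0 < h < r /\
     Rabs (F (x + h) + F (x - h) - 2 * F x) < 2 * eps * h ^ 2) ->
  F y1 / y1 <= F y2 / y2 + eps * y2.
Proof.
  intros HFc HF0 Heps Hy H. set (K := F y2 / y2 + eps * y2).
  assert (HG : F y1 + (eps * (y1 * y1) - y1 * K) <= 0).
  { apply (nonpos_of_pos_second_differences (fun x => F x + (eps * (x * x) - x * K)) 0 y2); try lra.
    - intros x _. apply continuity_pt_plus; [apply HFc|]. apply derivable_continuous_pt. reg.
    - cbv beta. unfold K. right. field. lra.
    - intros x Hx r Hr. destruct (H x Hx r Hr) as [h [Hh Hd]]. exists h. split; auto.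
      cbv beta. apply Rabs_def2 in Hd.
      replace (F (x + h) + (eps * ((x + h) * (x + h)) - (x + h) * K) + (F (x - h) + (eps * ((x - h) * (x - h))
        - (x - h) * K)) - 2 * (F x + (eps * (x * x) - x * K)))
        with (F (x + h) + F (x - h) - 2 * F x + 2 * eps * h ^ 2) by ring.
      lra. }
  apply (Rmult_le_reg_r y1); [lra|]. replace (F y1 / y1 * y1) with (F y1) by (field; lra).
  fold K. assert (0 <= eps * (y1 * y1)) by nra. lra.
Qed.

Lemma riemann_div_almost_monotone b B F f :
  (forall n, (1 <= n)%nat -> 0 <= b n <= B) ->
  (forall y N, (1 <= N)%nat -> Rabs (F y - riemann_psum b N y) <= B / INR N) ->
  continuity F -> F 0 = 0 ->
  (forall x, Un_cv (fun N => sin_psum b N x) (f x)) -> continuity_pt f 0 -> f 0 = 0 ->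
  forall eps, 0 < eps -> exists d, 0 < d /\ forall y1 y2, 0 < y1 < y2 -> y2 < d ->
    F y1 / y1 <= F y2 / y2 + eps * y2 /\ F y2 / y2 - eps * y2 <= F y1 / y1.
Proof.
  intros Hb HF HFc HF0 Hf Hf0c Hf0 eps Heps.
  destruct (Hf0c eps Heps) as [d [Hd Hfd]]. exists d. split; auto. intros y1 y2 Hy Hy2.
  assert (H2 : forall x, 0 < x < y2 -> forall r, 0 < r -> exists h, 0 < h < r /\
    Rabs (F (x + h) + F (x - h) - 2 * F x) < 2 * eps * h ^ 2).
  { intros x Hx r Hr.
    assert (Hfx : Rabs (f x) < eps).
    { specialize (Hfd x). simpl in Hfd. unfold R_dist in Hfd. rewrite Hf0, !Rminus_0_r in Hfd.
      apply Hfd. split; [split; [exact I | lra] | rewrite Rabs_right; lra]. }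
    destruct (riemann_second_derivative b B F x (f x) Hb HF (Hf x) (eps / 2) ltac:(lra)) as [t0 [Ht0 Ht]].
    assert (0 < Rmin t0 r) by (apply Rmin_pos; lra).
    pose proof (Rmin_l t0 r). pose proof (Rmin_r t0 r).
    set (t := Rmin t0 r / 4). assert (Htr : 0 < t < t0 /\ 2 * t < r) by (unfold t; lra).
    exists (2 * t). split; [lra|].
    specialize (Ht t ltac:(lra)). apply Rabs_le_inv in Ht. apply Rabs_def2 in Hfx.
    assert (0 < t ^ 2) by (apply pow_lt; lra).
    set (Q := (F (x + 2 * t) + F (x - 2 * t) - 2 * F x) / (4 * t ^ 2)) in *.
    replace (F (x + 2 * t) + F (x - 2 * t) - 2 * F x) with (4 * t ^ 2 * Q) by (unfold Q; field; lra).
    rewrite Rabs_mult, (Rabs_right (4 * t ^ 2)) by lra. replace ((2 * t) ^ 2) with (4 * t ^ 2) by ring.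
    assert (Rabs Q < 2 * eps) by (apply Rabs_def1; lra). nra. }
  split.
  - apply div_le_of_second_differences; auto.
  - assert (Hopp : - F y1 / y1 <= - F y2 / y2 + eps * y2).
    { apply (div_le_of_second_differences (fun x => - F x)); auto.
      - apply continuity_opp; auto.
      - rewrite HF0; ring.
      - intros x Hx r Hr. destruct (H2 x Hx r Hr) as [h [Hh Hh2]]. exists h. split; auto.
        replace (- F (x + h) + - F (x - h) - 2 * - F x) with (- (F (x + h) + F (x - h) - 2 * F x)) by ring.
        rewrite Rabs_Ropp. auto. }
    unfold Rdiv in *. lra.
Qed.

(** * Vanishing of the window sums *)

Lemma sin_ge_5_6 s : 0 < s <= 1 -> 5 / 6 * s <= sin s.
Proof. intros. pose proof PI_gt_3. pose proof (sin_ge_taylor3 s ltac:(lra)). nra. Qed.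

Lemma sin_le_17_20 s : 1 <= s <= 3 -> sin s <= 17 / 20 * s.
Proof.
  intros. pose proof PI_gt_3. pose proof (sin_le_taylor5 s ltac:(lra)).
  assert (1 - s ^ 2 / 6 + s ^ 4 / 120 <= 17 / 20).
  { assert (1 <= s ^ 2 <= 9) by nra. replace (s ^ 4) with (s ^ 2 * s ^ 2) by ring.
    assert ((s ^ 2 - 1) * (s ^ 2 - 9) <= 0) by nra. nra. }
  nra.
Qed.

Lemma sin_gap_eq c n q : 0 < n -> 0 < q ->
  c / n - c / n ^ 2 * sin (n * / q) * q = c / n ^ 2 * q * (n * / q - sin (n * / q)).
Proof. intros. field. lra. Qed.

Lemma sin_gap_nonneg c n q : 0 <= c -> 0 < n -> 0 < q -> 0 <= c / n - c / n ^ 2 * sin (n * / q) * q.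
Proof.
  intros Hc Hn Hq. rewrite sin_gap_eq by auto.
  assert (0 < n * / q) by (apply Rmult_lt_0_compat; [lra | apply Rinv_0_lt_compat; lra]).
  pose proof (sin_le_id (n * / q) ltac:(lra)).
  assert (0 < / n ^ 2) by (apply Rinv_0_lt_compat, pow_lt; lra).
  unfold Rdiv. repeat apply Rmult_le_pos; lra.
Qed.

Lemma sin_gap_ge c n q : 0 <= c -> 0 < q -> q <= n -> n <= 3 * q ->
  1 / 20 / q * c <= c / n - c / n ^ 2 * sin (n * / q) * q.
Proof.
  intros Hc Hq Hn1 Hn2. rewrite sin_gap_eq by lra.
  assert (Hz : 1 <= n * / q <= 3) by (split; apply (Rmult_le_reg_r q); try lra; field_simplify; lra).
  pose proof (sin_le_17_20 _ Hz).
  assert (0 <= c / n ^ 2 * q).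
  { assert (0 < / n ^ 2) by (apply Rinv_0_lt_compat, pow_lt; lra). unfold Rdiv. repeat apply Rmult_le_pos; lra. }
  apply Rle_trans with (c / n ^ 2 * q * (3 / 20 * (n * / q))); [|apply Rmult_le_compat_l; lra].
  replace (c / n ^ 2 * q * (3 / 20 * (n * / q))) with (3 / 20 * c / n) by (field; lra).
  apply (Rmult_le_reg_r (n * q)); [nra|].
  replace (1 / 20 / q * c * (n * q)) with (1 / 20 * c * n) by (field; lra).
  replace (3 / 20 * c / n * (n * q)) with (3 / 20 * c * q) by (field; lra). nra.
Qed.

Definition sum_b_div_n (b : nat -> R) (K : nat) : R := sum_lt (fun i => b (S i) / INR (S i)) K.

Section Riemann_psum_estimates.
Variables (b : nat -> R) (B : R).
Hypothesis Hb : forall n, (1 <= n)%nat -> 0 <= b n <= B.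

Lemma riemann_psum_mul N y c :
  riemann_psum b N y * c = sum_lt (fun i => b (S i) / INR (S i) ^ 2 * sin (INR (S i) * y) * c) N.
Proof.
  unfold riemann_psum. rewrite sin_psum_sum_lt, Rmult_comm, <- sum_lt_scal.
  apply sum_lt_ext; intros; ring.
Qed.

Lemma sum_b_div_n_mono K K' : (K <= K')%nat -> sum_b_div_n b K <= sum_b_div_n b K'.
Proof.
  intros H. apply sum_lt_mono; auto. intros i _. pose proof (Hb (S i) ltac:(lia)).
  apply Rmult_le_pos; [lra | apply Rlt_le, Rinv_0_lt_compat, lt_0_INR; lia].
Qed.

Lemma riemann_psum_tail_mul_ge K N c y : 0 <= c ->
  - (B * c * sum_lt (fun i => / INR (S (K + i)) ^ 2) N) <=
  sum_lt (fun i => b (S (K + i)) / INR (S (K + i)) ^ 2 * sin (INR (S (K + i)) * y) * c) N.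
Proof.
  intros Hc. rewrite <- sum_lt_scal, <- (Rmult_1_l (sum_lt _ N)), Ropp_mult_distr_l, <- sum_lt_scal.
  apply sum_lt_le. intros i _. pose proof (Hb (S (K + i)) ltac:(lia)).
  pose proof (SIN_bound (INR (S (K + i)) * y)).
  assert (0 < / INR (S (K + i)) ^ 2) by (apply Rinv_0_lt_compat, pow_lt, lt_0_INR; lia).
  unfold Rdiv. assert (0 <= b (S (K + i)) * / INR (S (K + i)) ^ 2) by (apply Rmult_le_pos; lra).
  assert (b (S (K + i)) * / INR (S (K + i)) ^ 2 <= B * / INR (S (K + i)) ^ 2) by (apply Rmult_le_compat_r; lra).
  set (a := b (S (K + i)) * / INR (S (K + i)) ^ 2) in *. set (w := / INR (S (K + i)) ^ 2) in *.
  set (sn := sin (INR (S (K + i)) * y)) in *.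
  assert (- a <= a * sn) by nra. assert (- (B * w) * c <= - a * c) by (apply Rmult_le_compat_r; lra).
  assert (- a * c <= a * sn * c) by (apply Rmult_le_compat_r; lra).
  replace (1 * - (B * c * w)) with (- (B * w) * c) by ring. lra.
Qed.

Lemma riemann_psum_inv_mul_ge K N : (1 <= K <= N)%nat ->
  5 / 6 * sum_b_div_n b K - B <= riemann_psum b N (/ INR K) * INR K.
Proof.
  intros HK. assert (HK1 : 1 <= INR K) by (apply INR_ge_1; lia).
  rewrite riemann_psum_mul. replace N with (K + (N - K))%nat by lia. rewrite sum_lt_add.
  assert (Hhead : 5 / 6 * sum_b_div_n b K <=
    sum_lt (fun i => b (S i) / INR (S i) ^ 2 * sin (INR (S i) * / INR K) * INR K) K).
  { unfold sum_b_div_n. rewrite <- sum_lt_scal. apply sum_lt_le. intros i Hi.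
    pose proof (Hb (S i) ltac:(lia)). assert (Hn : 1 <= INR (S i)) by (apply INR_ge_1; lia).
    assert (INR (S i) <= INR K) by (apply le_INR; lia).
    set (z := INR (S i) * / INR K).
    assert (Hz : 0 < z <= 1).
    { unfold z. split; [apply Rmult_lt_0_compat; [lra | apply Rinv_0_lt_compat; lra]|].
      apply (Rmult_le_reg_l (INR K)); [lra|]. field_simplify; lra. }
    pose proof (sin_ge_5_6 z Hz).
    replace (b (S i) / INR (S i) ^ 2 * sin z * INR K) with (b (S i) / INR (S i) * (sin z / z))
      by (unfold z; field; lra).
    assert (5 / 6 <= sin z / z) by (apply (Rmult_le_reg_r z); [lra|]; field_simplify; lra).
    assert (0 <= b (S i) / INR (S i)) by (apply Rmult_le_pos; [lra | apply Rlt_le, Rinv_0_lt_compat; lra]).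
    nra. }
  assert (Htail : - B <=
    sum_lt (fun i => b (S (K + i)) / INR (S (K + i)) ^ 2 * sin (INR (S (K + i)) * / INR K) * INR K) (N - K)).
  { assert (HB : 0 <= B) by (pose proof (Hb 1%nat (le_n _)); lra).
    eapply Rle_trans; [|apply riemann_psum_tail_mul_ge; lra].
    pose proof (sum_lt_inv_sq_le K (N - K) ltac:(lia)).
    assert (0 < / INR (K + (N - K))) by (apply Rinv_0_lt_compat, lt_0_INR; lia).
    assert (B * INR K * sum_lt (fun i => / INR (S (K + i)) ^ 2) (N - K) <= B * INR K * / INR K)
      by (apply Rmult_le_compat_l; nra).
    replace (B * INR K * / INR K) with B in * by (field; lra). lra. }
  lra.
Qed.

Lemma riemann_psum_div_ge N1 N y : (1 <= N1 <= N)%nat -> 0 < y -> INR N1 * y <= 1 ->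
  2 * sum_b_div_n b N1 - sum_b_div_n b N - B * INR N1 ^ 2 * y ^ 2 / 6 <= riemann_psum b N y / y.
Proof.
  intros HN Hy Hy1. assert (HN1 : 1 <= INR N1) by (apply INR_ge_1; lia).
  unfold Rdiv at 2. rewrite riemann_psum_mul. unfold sum_b_div_n.
  replace N with (N1 + (N - N1))%nat by lia. rewrite !sum_lt_add.
  assert (Hhead : sum_lt (fun i => b (S i) / INR (S i)) N1 - B * INR N1 ^ 2 * y ^ 2 / 6 <=
    sum_lt (fun i => b (S i) / INR (S i) ^ 2 * sin (INR (S i) * y) * / y) N1).
  { replace (B * INR N1 ^ 2 * y ^ 2 / 6) with (sum_lt (fun _ => B * INR N1 * y ^ 2 / 6) N1)
      by (rewrite sum_lt_const; field).
    rewrite <- sum_lt_minus. apply sum_lt_le. intros i Hi. pose proof (Hb (S i) ltac:(lia)).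
    assert (Hn : 1 <= INR (S i)) by (apply INR_ge_1; lia). assert (INR (S i) <= INR N1) by (apply le_INR; lia).
    set (n := INR (S i)) in *.
    pose proof (sin_ge_taylor3 (n * y) ltac:(pose proof PI_gt_3; split; nra)).
    replace (b (S i) / n ^ 2 * sin (n * y) * / y) with (b (S i) / n ^ 2 / y * sin (n * y)) by (field; lra).
    assert (0 <= b (S i) / n ^ 2 / y).
    { unfold Rdiv. repeat apply Rmult_le_pos; try lra; apply Rlt_le, Rinv_0_lt_compat; [apply pow_lt|]; lra. }
    eapply Rle_trans; [|apply Rmult_le_compat_l; eauto].
    replace (b (S i) / n ^ 2 / y * (n * y - (n * y) ^ 3 / 6)) with (b (S i) / n - b (S i) * n * y ^ 2 / 6)
      by (field; lra).
    assert (b (S i) * n * y ^ 2 <= B * INR N1 * y ^ 2)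
      by (apply Rmult_le_compat_r; [apply pow2_ge_0 | apply Rmult_le_compat; lra]).
    lra. }
  assert (Htail : - sum_lt (fun i => b (S (N1 + i)) / INR (S (N1 + i))) (N - N1) <=
    sum_lt (fun i => b (S (N1 + i)) / INR (S (N1 + i)) ^ 2 * sin (INR (S (N1 + i)) * y) * / y) (N - N1)).
  { rewrite <- (Rmult_1_l (sum_lt _ (N - N1))), Ropp_mult_distr_l, <- sum_lt_scal.
    apply sum_lt_le. intros i _. pose proof (Hb (S (N1 + i)) ltac:(lia)).
    assert (0 < INR (S (N1 + i))) by (apply lt_0_INR; lia). set (n := INR (S (N1 + i))) in *.
    pose proof (sin_ge_opp_id (n * y) ltac:(nra)).
    replace (b (S (N1 + i)) / n ^ 2 * sin (n * y) * / y) with (b (S (N1 + i)) / n ^ 2 / y * sin (n * y))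
      by (field; lra).
    assert (0 <= b (S (N1 + i)) / n ^ 2 / y).
    { unfold Rdiv. repeat apply Rmult_le_pos; try lra; apply Rlt_le, Rinv_0_lt_compat; [apply pow_lt|]; lra. }
    eapply Rle_trans; [|apply Rmult_le_compat_l; eauto]. right. field. lra. }
  lra.
Qed.

Lemma riemann_psum_inv_mul_le Q N : (1 <= Q)%nat -> (3 * Q <= N)%nat ->
  riemann_psum b N (/ INR Q) * INR Q <=
  sum_b_div_n b N - 1 / 20 / INR Q * sum_lt (fun i => b (Q + i)%nat) (2 * Q + 1).
Proof.
  intros HQ HN. assert (HQ1 : 1 <= INR Q) by (apply INR_ge_1; lia).
  rewrite riemann_psum_mul. unfold sum_b_div_n.
  set (g := fun i => b (S i) / INR (S i) - b (S i) / INR (S i) ^ 2 * sin (INR (S i) * / INR Q) * INR Q).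
  assert (Hg : forall i, 0 <= g i).
  { intros i. apply sin_gap_nonneg; [apply Hb; lia | apply lt_0_INR; lia | lra]. }
  assert (Hwindow : 1 / 20 / INR Q * sum_lt (fun i => b (Q + i)%nat) (2 * Q + 1) <=
    sum_lt (fun i => g (Q - 1 + i)%nat) (2 * Q + 1)).
  { rewrite <- sum_lt_scal. apply sum_lt_le. intros i Hi. unfold g.
    replace (S (Q - 1 + i)) with (Q + i)%nat by lia.
    apply sin_gap_ge; [apply Hb; lia | lra | apply le_INR; lia|].
    replace 3 with (INR 3) by (simpl; lra). rewrite <- mult_INR. apply le_INR; lia. }
  assert (Hsplit : sum_lt (fun i => g (Q - 1 + i)%nat) (2 * Q + 1) <= sum_lt g N).
  { replace N with ((Q - 1) + ((2 * Q + 1) + (N - 3 * Q)))%nat by lia. rewrite (sum_lt_add g (Q - 1)).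
    rewrite (sum_lt_add (fun i => g (Q - 1 + i)%nat) (2 * Q + 1)).
    pose proof (sum_lt_nonneg g (Q - 1) (fun i _ => Hg i)).
    pose proof (sum_lt_nonneg (fun i => g (Q - 1 + (2 * Q + 1 + i))%nat) (N - 3 * Q) (fun i _ => Hg _)). lra. }
  assert (Hgsum : sum_lt g N = sum_lt (fun i => b (S i) / INR (S i)) N -
    sum_lt (fun i => b (S i) / INR (S i) ^ 2 * sin (INR (S i) * / INR Q) * INR Q) N)
    by (unfold g; apply sum_lt_minus).
  lra.
Qed.

End Riemann_psum_estimates.

Section Window_sums.
Variables (b : nat -> R) (N0 : nat) (M : R).
Hypothesis Hb : forall n, (1 <= n)%nat -> 0 <= b n.
Hypothesis HN0 : (1 <= N0)%nat.
Hypothesis HM : 0 < M.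
Hypothesis Hvar : forall m, (1 <= m)%nat -> var_block b m <= M * block_max b m N0.

(* Each of the [k] blocks of length [N0] following [Q] contains a term dominating [b j / (1 + M)]. *)
Lemma mul_le_blocks_sum Q j k : (1 <= Q)%nat -> (j <= 2 * Q + 1)%nat -> (Q + k * N0 <= j)%nat ->
  INR k * b j <= (1 + M) * sum_lt (fun i => b (Q + i)%nat) (k * N0).
Proof.
  intros HQ Hj. induction k as [|k IH]; intros Hk; [simpl; lra|].
  pose proof (IH ltac:(nia)).
  destruct (le_term_window b N0 M Hvar j (Q + k * N0)%nat HN0 ltac:(lia) ltac:(nia)) as [p [Hp Hbp]].
  replace (S k * N0)%nat with (k * N0 + N0)%nat by lia. rewrite sum_lt_add.
  assert (b p <= sum_lt (fun i => b (Q + (k * N0 + i))%nat) N0).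
  { replace p with (Q + (k * N0 + (p - Q - k * N0)))%nat by lia.
    apply (sum_lt_ge_term (fun i => b (Q + (k * N0 + i))%nat)); [intros; apply Hb; lia | lia]. }
  rewrite S_INR. nra.
Qed.

Lemma mul_le_window_sum Q j : (N0 <= Q)%nat -> (2 * Q <= j <= 2 * Q + 1)%nat ->
  INR j * b j <= 4 * INR N0 * (1 + M) * sum_lt (fun i => b (Q + i)%nat) (2 * Q + 1).
Proof.
  intros HNQ Hj. set (W := sum_lt (fun i => b (Q + i)%nat) (2 * Q + 1)).
  assert (Hnn : forall i, (i < 2 * Q + 1)%nat -> 0 <= b (Q + i)%nat) by (intros; apply Hb; lia).
  set (K := ((j - Q) / N0)%nat).
  assert (HKN : (K * N0 <= j - Q < K * N0 + N0)%nat).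
  { pose proof (Nat.div_mod (j - Q) N0 ltac:(lia)). pose proof (Nat.mod_upper_bound (j - Q) N0 ltac:(lia)).
    unfold K. nia. }
  assert (Hblocks : INR K * b j <= (1 + M) * W).
  { eapply Rle_trans; [apply (mul_le_blocks_sum Q j K); lia|].
    apply Rmult_le_compat_l; [lra | apply sum_lt_mono; auto; lia]. }
  assert (Hbj : b j <= (1 + M) * W).
  { destruct (le_term_window b N0 M Hvar j Q HN0 ltac:(lia) ltac:(lia)) as [p [Hp Hbp]].
    assert (b p <= W)
      by (replace p with (Q + (p - Q))%nat by lia; apply (sum_lt_ge_term (fun i => b (Q + i)%nat)); auto; lia).
    pose proof (Hb j ltac:(lia)). nra. }
  assert (HKr : INR j / 2 - INR N0 <= INR K * INR N0).
  { rewrite <- mult_INR. assert (INR (j - Q) < INR (K * N0 + N0)) by (apply lt_INR; lia).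
    rewrite plus_INR, minus_INR in * by lia.
    assert (2 * INR Q <= INR j)
      by (replace 2 with (INR 2) by (simpl; lra); rewrite <- mult_INR; apply le_INR; lia).
    lra. }
  assert (0 <= W) by (apply sum_lt_nonneg; auto).
  assert (HN0r : 1 <= INR N0) by (apply INR_ge_1; auto).
  pose proof (Hb j ltac:(lia)).
  assert ((INR j / 2 - INR N0) * b j <= INR N0 * ((1 + M) * W)).
  { eapply Rle_trans; [apply Rmult_le_compat_r; [lra | apply HKr]|].
    replace (INR K * INR N0 * b j) with (INR N0 * (INR K * b j)) by ring.
    apply Rmult_le_compat_l; lra. }
  assert (INR N0 * b j <= INR N0 * ((1 + M) * W)) by (apply Rmult_le_compat_l; lra).
  nra.
Qed.

End Window_sums.

Section Necessity.
Variables (b : nat -> R) (B : R) (F : R -> R).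
Hypothesis Hb : forall n, (1 <= n)%nat -> 0 <= b n <= B.
Hypothesis HF : forall y N, (1 <= N)%nat -> Rabs (F y - riemann_psum b N y) <= B / INR N.
Hypothesis Hmono : forall eps, 0 < eps -> exists d, 0 < d /\ forall y1 y2, 0 < y1 < y2 -> y2 < d ->
  F y1 / y1 <= F y2 / y2 + eps * y2 /\ F y2 / y2 - eps * y2 <= F y1 / y1.

Lemma le_F_mul_of_le_riemann_psum_mul X y c N0 : 0 <= c ->
  (forall N, (N0 <= N)%nat -> X <= riemann_psum b N y * c) -> X <= F y * c.
Proof.
  intros Hc H. apply (Rle_of_le_plus_div_INR _ _ (B * c) (S N0)). intros N HN.
  pose proof (Rabs_le_inv _ _ (HF y N ltac:(lia))). pose proof (H N ltac:(lia)).
  assert (riemann_psum b N y * c <= (F y + B / INR N) * c) by (apply Rmult_le_compat_r; lra).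
  replace (B * c / INR N) with (B / INR N * c) by (field; apply not_0_INR; lia). lra.
Qed.

Lemma F_mul_le_of_riemann_psum_mul_le X y c N0 : 0 <= c ->
  (forall N, (N0 <= N)%nat -> riemann_psum b N y * c <= X) -> F y * c <= X.
Proof.
  intros Hc H. apply (Rle_of_le_plus_div_INR _ _ (B * c) (S N0)). intros N HN.
  pose proof (Rabs_le_inv _ _ (HF y N ltac:(lia))). pose proof (H N ltac:(lia)).
  assert ((F y - B / INR N) * c <= riemann_psum b N y * c) by (apply Rmult_le_compat_r; lra).
  replace (B * c / INR N) with (B / INR N * c) by (field; apply not_0_INR; lia). lra.
Qed.

Lemma sum_b_div_n_bounded : exists T, forall K, sum_b_div_n b K <= T.
Proof.
  destruct (Hmono 1 ltac:(lra)) as [d [Hd Hd2]]. set (y := d / 2).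
  destruct (div_INR_eventually_lt 1 y ltac:(unfold y; lra)) as [K0 [HK0 HK0']].
  exists (6 / 5 * (F y / y + y + B)). intros K.
  apply Rle_trans with (sum_b_div_n b (max K K0)); [apply sum_b_div_n_mono with B; auto; lia|].
  set (K' := max K K0).
  assert (HK'r : 0 < INR K') by (apply lt_0_INR; unfold K'; lia).
  pose proof (HK0' K' ltac:(unfold K'; lia)) as HK'. unfold Rdiv in HK'. rewrite Rmult_1_l in HK'.
  assert (0 < / INR K') by (apply Rinv_0_lt_compat; auto).
  assert (Hlow : 5 / 6 * sum_b_div_n b K' - B <= F (/ INR K') * INR K').
  { apply (le_F_mul_of_le_riemann_psum_mul _ _ _ K'); [lra|]. intros N HN.
    apply riemann_psum_inv_mul_ge; auto. unfold K'; lia. }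
  destruct (Hd2 (/ INR K') y) as [Hm _]; [lra | unfold y; lra|].
  replace (F (/ INR K') / / INR K') with (F (/ INR K') * INR K') in Hm by (field; lra).
  lra.
Qed.

Lemma sum_b_div_n_cv : exists S, Un_cv (sum_b_div_n b) S /\ forall N, sum_b_div_n b N <= S.
Proof.
  assert (Hgr : Un_growing (sum_b_div_n b)) by (intros n; apply sum_b_div_n_mono with B; auto).
  assert (Hub : has_ub (sum_b_div_n b)).
  { destruct sum_b_div_n_bounded as [T HT]. exists T. intros x [i ->]. apply HT. }
  destruct (growing_cv _ Hgr Hub) as [S HS]. exists S. split; auto. apply growing_ineq; auto.
Qed.

Section Limit.
Variable S : R.
Hypothesis HS : Un_cv (sum_b_div_n b) S.
Hypothesis HSup : forall N, sum_b_div_n b N <= S.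

Lemma lim_le_F_div eps : 0 < eps -> exists d, 0 < d /\ forall y, 0 < y < d -> S <= F y / y + eps * y.
Proof.
  intros Heps. destruct (Hmono eps Heps) as [d [Hd Hd2]]. exists d. split; auto. intros y Hy.
  apply Rle_plus_epsilon. intros eta Heta.
  destruct (HS (eta / 3) ltac:(lra)) as [N1' HN1']. set (N1 := max 1 N1').
  pose proof (HN1' N1 ltac:(unfold N1; lia)) as HT. unfold R_dist in HT. apply Rabs_def2 in HT.
  assert (HN1r : 1 <= INR N1) by (apply INR_ge_1; unfold N1; lia).
  assert (HB : 0 <= B) by (pose proof (Hb 1%nat (le_n _)); lra).
  set (den := B * INR N1 ^ 2 + 1).
  assert (Hden : 0 < den) by (unfold den; assert (0 <= INR N1 ^ 2) by (apply pow_le; lra); nra).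
  set (y1 := Rmin (y / 2) (Rmin (/ INR N1) (eta / den))).
  assert (Hy1 : 0 < y1).
  { unfold y1. repeat apply Rmin_pos; try lra; [apply Rinv_0_lt_compat | apply Rdiv_lt_0_compat]; lra. }
  assert (Hy1a : y1 <= y / 2) by apply Rmin_l.
  assert (Hy1b : y1 <= / INR N1) by (eapply Rle_trans; [apply Rmin_r | apply Rmin_l]).
  assert (Hy1c : y1 <= eta / den) by (eapply Rle_trans; [apply Rmin_r | apply Rmin_r]).
  assert (HNy : INR N1 * y1 <= 1).
  { apply (Rmult_le_compat_l (INR N1)) in Hy1b; [|lra]. rewrite Rinv_r in Hy1b by lra. lra. }
  assert (Hsmall : B * INR N1 ^ 2 * y1 ^ 2 <= eta).
  { assert (y1 <= 1) by (assert (/ INR N1 <= 1) by (rewrite <- Rinv_1; apply Rinv_le_contravar; lra); lra).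
    assert (y1 * den <= eta).
    { apply (Rmult_le_compat_r den) in Hy1c; [|lra].
      replace (eta / den * den) with eta in Hy1c by (field; lra). lra. }
    unfold den in *. assert (0 <= B * INR N1 ^ 2) by (apply Rmult_le_pos; [lra | apply pow_le; lra]).
    assert (y1 ^ 2 <= y1) by nra. nra. }
  assert (Hlow : 2 * sum_b_div_n b N1 - S - B * INR N1 ^ 2 * y1 ^ 2 / 6 <= F y1 * / y1).
  { apply (le_F_mul_of_le_riemann_psum_mul _ _ _ N1); [apply Rlt_le, Rinv_0_lt_compat; auto|].
    intros N HN. pose proof (HSup N).
    pose proof (riemann_psum_div_ge b B Hb N1 N y1 ltac:(unfold N1 in *; lia) Hy1 HNy). unfold Rdiv in *. lra. }
  destruct (Hd2 y1 y) as [Hm _]; [lra | lra|]. unfold Rdiv in *. lra.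
Qed.

Lemma F_inv_mul_le Q : (1 <= Q)%nat ->
  F (/ INR Q) * INR Q <= S - 1 / 20 / INR Q * sum_lt (fun i => b (Q + i)%nat) (2 * Q + 1).
Proof.
  intros HQ. apply (F_mul_le_of_riemann_psum_mul_le _ _ _ (3 * Q)); [apply pos_INR|].
  intros N HN. pose proof (riemann_psum_inv_mul_le b B Hb Q N HQ HN). pose proof (HSup N). lra.
Qed.

End Limit.

Lemma window_sum_vanishes e : 0 < e ->
  exists Q0, forall Q, (Q0 <= Q)%nat -> sum_lt (fun i => b (Q + i)%nat) (2 * Q + 1) <= e.
Proof.
  intros He. destruct sum_b_div_n_cv as [S [HS HSup]].
  destruct (lim_le_F_div S HS HSup (e / 20) ltac:(lra)) as [d [Hd Hle]].
  destruct (div_INR_eventually_lt 1 d Hd) as [Q0 [HQ0 HQ0']]. exists Q0. intros Q HQ.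
  assert (HQr : 0 < INR Q) by (apply lt_0_INR; lia).
  pose proof (HQ0' Q HQ) as HQd. unfold Rdiv in HQd. rewrite Rmult_1_l in HQd.
  assert (0 < / INR Q) by (apply Rinv_0_lt_compat; auto).
  pose proof (Hle (/ INR Q) ltac:(lra)) as Hlow. pose proof (F_inv_mul_le S HSup Q ltac:(lia)).
  replace (F (/ INR Q) / / INR Q) with (F (/ INR Q) * INR Q) in Hlow by (field; lra).
  assert (Hw : 1 / 20 / INR Q * sum_lt (fun i => b (Q + i)%nat) (2 * Q + 1) <= e / 20 * / INR Q) by lra.
  apply (Rmult_le_compat_l (20 * INR Q)) in Hw; [|lra].
  replace (20 * INR Q * (1 / 20 / INR Q * sum_lt (fun i => b (Q + i)%nat) (2 * Q + 1)))
    with (sum_lt (fun i => b (Q + i)%nat) (2 * Q + 1)) in Hw by (field; lra).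
  replace (20 * INR Q * (e / 20 * / INR Q)) with e in Hw by (field; lra). auto.
Qed.

End Necessity.

Lemma sin_series_conv_cont_of_unif_conv b : sin_series_unif_conv b -> sin_series_conv_cont b.
Proof.
  intros [f Hf]. exists f. split.
  - intros x e He. destruct (Hf e He) as [N HN]. exists N. intros n Hn. apply HN; lia.
  - apply (unif_cv_continuity (sin_psum b)); auto. apply continuity_sin_psum.
Qed.

Lemma sin_series_unif_conv_of_mul_cv b N0 M :
  (forall n, (1 <= n)%nat -> 0 <= b n) -> 0 < M ->
  (forall m, (1 <= m)%nat -> var_block b m <= M * block_max b m N0) ->
  Un_cv (fun n => INR n * b n) 0 -> sin_series_unif_conv b.
Proof. intros. apply unif_cv_of_unif_cauchy, (sin_psum_unif_cauchy b N0 M); auto. Qed.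

Lemma mul_cv_of_sin_series_conv_cont b N0 M :
  (forall n, (1 <= n)%nat -> 0 <= b n) -> (1 <= N0)%nat -> 0 < M ->
  (forall m, (1 <= m)%nat -> var_block b m <= M * block_max b m N0) ->
  sin_series_conv_cont b -> Un_cv (fun n => INR n * b n) 0.
Proof.
  intros Hb HN0 HM Hvar [f [Hf Hcont]].
  destruct (bounded_of_sin_psum_cv b N0 M Hb HN0 HM Hvar (fun x => ex_intro _ (f x) (Hf x))) as [B [HB HbB]].
  assert (Hb' : forall n, (1 <= n)%nat -> 0 <= b n <= B) by (intros; split; auto).
  destruct (riemann_function_exists b B Hb') as [F [HF [HFc HF0]]].
  assert (Hf0 : f 0 = 0).
  { apply (UL_sequence (fun N => sin_psum b N 0)); auto. intros e He. exists O. intros n _.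
    rewrite sin_psum_0. unfold R_dist. rewrite Rminus_0_r, Rabs_R0. lra. }
  pose proof (riemann_div_almost_monotone b B F f Hb' HF HFc HF0 Hf (Hcont 0) Hf0) as Hmono.
  intros eps Heps. assert (HN0r : 1 <= INR N0) by (apply INR_ge_1; auto).
  set (e := eps / (8 * INR N0 * (1 + M))).
  assert (He : 0 < e) by (unfold e; apply Rdiv_lt_0_compat; [lra | nra]).
  destruct (window_sum_vanishes b B F Hb' HF Hmono e He) as [Q0 HQ0].
  exists (2 * (Q0 + N0))%nat. intros j Hj. unfold R_dist. rewrite Rminus_0_r.
  set (Q := (j / 2)%nat).
  assert (HQ : (2 * Q <= j <= 2 * Q + 1)%nat).
  { pose proof (Nat.div_mod j 2 ltac:(lia)). pose proof (Nat.mod_upper_bound j 2 ltac:(lia)). unfold Q. lia. }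
  pose proof (mul_le_window_sum b N0 M Hb HN0 HM Hvar Q j ltac:(lia) HQ).
  pose proof (HQ0 Q ltac:(lia)).
  assert (0 <= INR j * b j) by (apply Rmult_le_pos; [apply pos_INR | apply Hb; lia]).
  rewrite Rabs_right by lra.
  assert (4 * INR N0 * (1 + M) * sum_lt (fun i => b (Q + i)%nat) (2 * Q + 1) <= 4 * INR N0 * (1 + M) * e)
    by (apply Rmult_le_compat_l; [nra | auto]).
  replace (4 * INR N0 * (1 + M) * e) with (eps / 2) in * by (unfold e; field; nra). lra.
Qed.

Theorem theorem2 (b : nat -> R) (N0 : nat) (M : R) :
  (forall n : nat, (1 <= n)%nat -> 0 <= b n) ->
  (1 <= N0)%nat -> 0 < M ->
  (forall m : nat, (1 <= m)%nat -> var_block b m <= M * block_max b m N0) ->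
  (sin_series_unif_conv b <-> Un_cv (fun n => INR n * b n) 0) /\
  (sin_series_conv_cont b <-> Un_cv (fun n => INR n * b n) 0).
Proof.
  intros Hb HN0 HM Hvar.
  pose proof (sin_series_unif_conv_of_mul_cv b N0 M Hb HM Hvar) as Hsuff.
  pose proof (mul_cv_of_sin_series_conv_cont b N0 M Hb HN0 HM Hvar) as Hnec.
  pose proof (sin_series_conv_cont_of_unif_conv b) as Hi_ii.
  tauto.
Qed.
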